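(* In Case II, the potentials $u_t$ satisfy, for all $\rho\in\mathbb R$, $t\in[0,T)$: (1) $(n-k)(T-t)<u_t'(\rho)<(n+k)(T-t)$; (2) $\lim_{t\to T}u_t(\rho)=0$; (3) there is $C>0$ with $C^{-1}\frac{e^{k\rho}}{(1+e^{k\rho})^2}(T-t)<u_t''(\rho)\leqslant C\frac{e^{k\rho}}{(1+e^{k\rho})^2}(T-t)$ and $\frac{|u_t'''(\rho)|}{u_t''(\rho)}\leqslant C$.
   Context: Setting: $X=X_{n,k}$ with $1\leqslant k\leqslant n-1$, coordinates $x\in\mathbb C^n\setminus\{0\}$ on $X\setminus(D_0\cup D_\infty)$, $\rho=\log\sum|x_i|^2$. $\omega(t)$ solves $\omega(t)=\omega_0-t\,\mathrm{Ric}(\omega(t))$, $\omega(0)=\omega_0$, with $\omega_0$ Calabi symmetric; $\omega(t)=\sqrt{-1}\partial\bar\partial u_t(\rho)$, $u_t'>0$, $u_t''>0$, $u_t(0)=0$, $\lim_{\rho\to-\infty}u_t'=a_t=a_0+(k-n)t$, $\lim_{\rho\to\infty}u_t'=b_t=b_0-(k+n)t$, $0<a_0<b_0$. Case II: $a_0(n+k)=b_0(n-k)$, $T=\frac{a_0}{n-k}$, so $a_t=(n-k)(T-t)$, $b_t=(n+k)(T-t)$. *)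

From Stdlib Require Import Reals.
From Coquelicot Require Import Coquelicot.
Open Scope R_scope.

Definition smooth (f : R -> R) : Prop := forall (m : nat) (x : R), ex_derive_n f m x.

(* A Calabi-symmetric potential u(rho) on X_{n,k} \ (D_0 u D_oo) of a Kähler
   metric omega = i dd^c u(rho) that extends smoothly to X_{n,k}, with
   lim_{-oo} u' = a, lim_{+oo} u' = b, normalized by u(0) = 0.
   Smooth extension across D_0, D_oo is expressed (Calabi / Hwang–Singer) via
   the momentum profile phi(u'(rho)) = u''(rho), phi smooth on [a,b],
   phi(a) = phi(b) = 0, phi'(a) = k, phi'(b) = -k. *)
Definition calabi_potential (n k : nat) (a b : R) (f : R -> R) : Prop :=
  smooth f /\ f 0 = 0 /\
  (forall r, 0 < Derive f r) /\ (forall r, 0 < Derive_n f 2 r) /\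
  filterlim (Derive f) (Rbar_locally m_infty) (locally a) /\
  filterlim (Derive f) (Rbar_locally p_infty) (locally b) /\
  exists phi : R -> R, smooth phi /\ phi a = 0 /\ phi b = 0 /\
    Derive phi a = INR k /\ Derive phi b = - INR k /\
    forall r, phi (Derive f r) = Derive_n f 2 r.

(* omega(t) = omega_0 - t Ric(omega(t)) for omega = i dd^c u(rho).
   In the x coordinates det g = (u')^{n-1} u'' e^{-n rho}, so
   Ric(omega_t) = i dd^c (n rho - log((u_t')^{n-1} u_t'')); for n >= 2, a radial
   function F(rho) has i dd^c F = 0 iff F is constant. *)
Definition continuity_eq (n : nat) (u0 ut : R -> R) (t : R) : Prop :=
  exists c : R, forall r,
    ut r - u0 r + t * INR n * r - t * ln ((Derive ut r) ^ (n - 1) * Derive_n ut 2 r) = c.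

(** The slope [u_t'] increases from [(n - k)(T - t)] to [(n + k)(T - t)]; this is (1), and
    together with [u_t(0) = 0] it gives [|u_t(rho)| <= (n + k)(T - t) |rho|], hence (2).

    For (3), the initial potential is read through its momentum profile [phi(u_0') = u_0''],
    which vanishes linearly at both ends of the moment interval [[a_0, b_0]]: hence [u_0''] is
    comparable to [(u_0' - a_0)(b_0 - u_0')], and integrating the logit of [u_0'] shows that the
    latter is comparable to [e^(k rho) / (1 + e^(k rho))^2].  Along the flow, [u_t] is compared
    with the rescaled potential [(T - t)/T u_0].  The continuity equation turns
    [log (u_t''/u_0'') + (n - 1) log (u_t'/u_0')] into [(u_t - (T - t)/T u_0)/t] plus a fixed
    potential of [Ric(omega_0) - omega_0/T]; the maximum principle, applied to
    [u_t' - (T - t)/T u_0'] and, after a small convex perturbation, to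
    [(u_t - (T - t)/T u_0)/t], bounds both, so [u_t''] stays within a fixed factor of
    [(T - t)/T u_0''] and [u_t'''/u_t''] stays bounded. *)

From Stdlib Require Import Reals Lra Psatz Lia.
From Coquelicot Require Import Coquelicot.
Open Scope R_scope.

(** * Calculus on the real line *)

(** Puts iterated derivatives in the normal form [Derive (Derive f)], so that [field] sees
    syntactically equal atoms. *)
Ltac normalize_Derive :=
  simpl; repeat match goal with
    |- context [Derive (fun x => ?g x)] => change (Derive (fun x => g x)) with (Derive g) end.

Lemma Derive_n_Derive (f : R -> R) m x : Derive_n (Derive f) m x = Derive_n f (S m) x.
Proof.
  revert x; induction m as [|m IH]; intro x; [reflexivity|].
  apply Derive_ext; intro; apply IH.
Qed.

Lemma smooth_ex_derive (f : R -> R) : smooth f -> forall x, ex_derive f x.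
Proof. intros H x. exact (H 1%nat x). Qed.

Lemma smooth_Derive (f : R -> R) : smooth f -> smooth (Derive f).
Proof.
  intros H [|m] x; [exact I|].
  apply (ex_derive_ext (Derive_n f (S m))); [intro; symmetry; apply Derive_n_Derive|].
  exact (H (S (S m)) x).
Qed.

Lemma ex_derive_continuity_pt (f : R -> R) x : ex_derive f x -> continuity_pt f x.
Proof. intro H. apply continuity_pt_filterlim. exact (ex_derive_continuous f x H). Qed.

Lemma MVT_Derive (f : R -> R) a b : a < b -> (forall z, a <= z <= b -> ex_derive f z) ->
  exists c, a <= c <= b /\ f b - f a = Derive f c * (b - a).
Proof.
  intros Hab Hd. destruct (MVT_gen f a b (Derive f)) as [c [Hc E]].
  - intros x Hx. rewrite Rmin_left, Rmax_right in Hx by lra.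
    apply Derive_correct, Hd; lra.
  - intros x Hx. rewrite Rmin_left, Rmax_right in Hx by lra.
    apply ex_derive_continuity_pt, Hd; lra.
  - exists c. rewrite Rmin_left, Rmax_right in Hc by lra. auto.
Qed.

Lemma Derive_nonneg_le (f : R -> R) a b : a <= b ->
  (forall z, a <= z <= b -> ex_derive f z) ->
  (forall z, a <= z <= b -> 0 <= Derive f z) -> f a <= f b.
Proof.
  intros Hab Hd Hp. destruct (Req_dec a b) as [->|Hne]; [lra|].
  destruct (MVT_Derive f a b) as [c [Hc E]]; [lra|auto|]. specialize (Hp c Hc). nra.
Qed.

Lemma Derive_pos_lt (f : R -> R) a b : a < b ->
  (forall z, a <= z <= b -> ex_derive f z) ->
  (forall z, a <= z <= b -> 0 < Derive f z) -> f a < f b.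
Proof.
  intros Hab Hd Hp. destruct (MVT_Derive f a b) as [c [Hc E]]; [lra|auto|].
  specialize (Hp c Hc). nra.
Qed.

Lemma Derive_neg_lt (f : R -> R) a b : a < b ->
  (forall z, a <= z <= b -> ex_derive f z) ->
  (forall z, a <= z <= b -> Derive f z < 0) -> f b < f a.
Proof.
  intros Hab Hd Hp. destruct (MVT_Derive f a b) as [c [Hc E]]; [lra|auto|].
  specialize (Hp c Hc). nra.
Qed.

Lemma Derive_dominated_segment (h q : R -> R) a b : a <= b ->
  (forall z, a <= z <= b ->
     ex_derive h z /\ ex_derive q z /\ Rabs (Derive h z) <= Derive q z) ->
  Rabs (h b - h a) <= q b - q a.
Proof.
  intros Hab H.
  assert (Hm : q a - h a <= q b - h b).
  { apply (Derive_nonneg_le (fun z => q z - h z)); auto.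
    - intros z Hz. destruct (H z Hz) as [? [? ?]]. auto_derive; auto.
    - intros z Hz. destruct (H z Hz) as [? [? Hb]]. rewrite Derive_minus by auto.
      apply Rabs_le_between in Hb. lra. }
  assert (Hp : q a + h a <= q b + h b).
  { apply (Derive_nonneg_le (fun z => q z + h z)); auto.
    - intros z Hz. destruct (H z Hz) as [? [? ?]]. auto_derive; auto.
    - intros z Hz. destruct (H z Hz) as [? [? Hb]]. rewrite Derive_plus by auto.
      apply Rabs_le_between in Hb. lra. }
  apply Rabs_le_between. lra.
Qed.

Lemma Derive_dominated (h q : R -> R) :
  (forall z, ex_derive h z /\ ex_derive q z /\ Rabs (Derive h z) <= Derive q z) ->
  forall x y, Rabs (h x - h y) <= Rabs (q x - q y).
Proof.
  intros H x y. destruct (Rle_dec y x) as [Hl|Hl].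
  - pose proof (Derive_dominated_segment h q y x Hl (fun z _ => H z)) as D.
    rewrite (Rabs_right (q x - q y)); [lra|]. pose proof (Rabs_pos (h x - h y)). lra.
  - pose proof (Derive_dominated_segment h q x y ltac:(lra) (fun z _ => H z)) as D.
    rewrite Rabs_minus_sym, (Rabs_minus_sym (q x)).
    rewrite (Rabs_right (q y - q x)); [lra|]. pose proof (Rabs_pos (h y - h x)). lra.
Qed.

Lemma filterlim_m_infty_eps (y : R -> R) a : filterlim y (Rbar_locally m_infty) (locally a) ->
  forall eps, 0 < eps -> exists M, forall x, x < M -> Rabs (y x - a) < eps.
Proof.
  intros H eps He. destruct (proj1 (filterlim_locally y a) H (mkposreal eps He)) as [M HM].
  exists M. intros x Hx; apply HM, Hx.
Qed.

Lemma filterlim_p_infty_eps (y : R -> R) a : filterlim y (Rbar_locally p_infty) (locally a) ->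
  forall eps, 0 < eps -> exists M, forall x, M < x -> Rabs (y x - a) < eps.
Proof.
  intros H eps He. destruct (proj1 (filterlim_locally y a) H (mkposreal eps He)) as [M HM].
  exists M. intros x Hx; apply HM, Hx.
Qed.

Lemma increasing_between_limits (y : R -> R) a b :
  (forall r, ex_derive y r) -> (forall r, 0 < Derive y r) ->
  filterlim y (Rbar_locally m_infty) (locally a) ->
  filterlim y (Rbar_locally p_infty) (locally b) -> forall r, a < y r < b.
Proof.
  intros Hd Hp Ha Hb r. split.
  - assert (E1 : y (r - 1) < y r) by (apply Derive_pos_lt; auto; lra).
    destruct (Rlt_dec a (y r)) as [?|Hn]; auto. exfalso.
    destruct (filterlim_m_infty_eps y a Ha (y r - y (r - 1))) as [M HM]; [lra|].
    set (x := Rmin M (r - 1) - 1).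
    assert (Hx : x < M) by (unfold x; pose proof (Rmin_l M (r - 1)); lra).
    assert (y x < y (r - 1))
      by (apply Derive_pos_lt; auto; unfold x; pose proof (Rmin_r M (r - 1)); lra).
    specialize (HM x Hx). apply Rabs_lt_between in HM. lra.
  - assert (E1 : y r < y (r + 1)) by (apply Derive_pos_lt; auto; lra).
    destruct (Rlt_dec (y r) b) as [?|Hn]; auto. exfalso.
    destruct (filterlim_p_infty_eps y b Hb (y (r + 1) - y r)) as [M HM]; [lra|].
    set (x := Rmax M (r + 1) + 1).
    assert (Hx : M < x) by (unfold x; pose proof (Rmax_l M (r + 1)); lra).
    assert (y (r + 1) < y x)
      by (apply Derive_pos_lt; auto; unfold x; pose proof (Rmax_r M (r + 1)); lra).
    specialize (HM x Hx). apply Rabs_lt_between in HM. lra.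
Qed.

Lemma continuous_limits_surjective (y : R -> R) a b :
  (forall r, continuity_pt y r) ->
  filterlim y (Rbar_locally m_infty) (locally a) ->
  filterlim y (Rbar_locally p_infty) (locally b) ->
  forall x, a < x < b -> exists r, y r = x.
Proof.
  intros Hc Ha Hb x Hx.
  destruct (filterlim_m_infty_eps y a Ha (x - a)) as [M1 HM1]; [lra|].
  destruct (filterlim_p_infty_eps y b Hb (b - x)) as [M2 HM2]; [lra|].
  specialize (HM1 (M1 - 1) ltac:(lra)). specialize (HM2 (M2 + 1) ltac:(lra)).
  apply Rabs_lt_between in HM1, HM2.
  destruct (IVT_gen y (M1 - 1) (M2 + 1) x Hc) as [r [_ Hr]]; [|exists r; exact Hr].
  pose proof (Rmin_l (y (M1 - 1)) (y (M2 + 1))). pose proof (Rmax_r (y (M1 - 1)) (y (M2 + 1))).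
  lra.
Qed.

Lemma global_max_Derive (f : R -> R) c :
  (forall z, ex_derive f z) -> ex_derive (Derive f) c ->
  (forall z, f z <= f c) -> Derive f c = 0 /\ Derive (Derive f) c <= 0.
Proof.
  intros H1 H2 Hm.
  assert (D1 : Derive f c = 0).
  { rewrite <- (Derive_Reals f c (ex_derive_Reals_0 f c (H1 c))).
    apply (deriv_maximum f (c - 1) (c + 1)); try lra. intros; apply Hm. }
  split; [exact D1|].
  destruct (Rle_dec (Derive (Derive f) c) 0) as [?|Hp]; [assumption|exfalso].
  pose proof (proj1 (is_derive_Reals _ _ _) (Derive_correct _ _ H2)) as Hl.
  destruct (Hl (Derive (Derive f) c / 2) ltac:(lra)) as [d Hd]. pose proof (cond_pos d).
  assert (P1 : forall z, c < z < c + d -> 0 < Derive f z).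
  { intros z Hz. specialize (Hd (z - c) ltac:(lra) ltac:(apply Rabs_lt_between; lra)).
    replace (c + (z - c)) with z in Hd by ring. rewrite D1 in Hd.
    apply Rabs_lt_between in Hd.
    assert (Hq : 0 < (Derive f z - 0) / (z - c)) by lra.
    replace (Derive f z) with ((Derive f z - 0) / (z - c) * (z - c)) by (field; lra). nra. }
  assert (f c <= f (c + d/4)).
  { apply Derive_nonneg_le; [lra|auto|]. intros z Hz.
    destruct (Req_dec z c) as [->|]; [lra|]. apply Rlt_le, P1; lra. }
  assert (f (c + d/4) < f (c + d/2)).
  { apply Derive_pos_lt; [lra|auto|]. intros; apply P1; lra. }
  specialize (Hm (c + d/2)). lra.
Qed.

Lemma global_min_Derive (f : R -> R) c :
  (forall z, ex_derive f z) -> ex_derive (Derive f) c ->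
  (forall z, f c <= f z) -> Derive f c = 0 /\ 0 <= Derive (Derive f) c.
Proof.
  intros H1 H2 Hm.
  assert (E1 : forall z, Derive (fun x => - f x) z = - Derive f z) by (intro; apply Derive_opp).
  assert (E2 : Derive (Derive (fun x => - f x)) c = - Derive (Derive f) c).
  { rewrite (Derive_ext _ _ c E1). apply Derive_opp. }
  destruct (global_max_Derive (fun x => - f x) c) as [A B].
  - intro z. auto_derive; auto.
  - apply (ex_derive_ext (fun x => - Derive f x)); [intro; symmetry; apply E1|].
    auto_derive; auto.
  - intro z. specialize (Hm z). lra.
  - rewrite E1 in A. rewrite E2 in B. split; lra.
Qed.

Lemma continuous_attains_max (g : R -> R) x0 : (forall z, continuity_pt g z) ->
  (exists M1, forall x, x <= M1 -> g x < g x0) ->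
  (exists M2, forall x, M2 <= x -> g x < g x0) ->
  exists c, forall x, g x <= g c.
Proof.
  intros Hc [M1 H1] [M2 H2].
  destruct (continuity_ab_maj g (Rmin M1 x0) (Rmax M2 x0)) as [c [Hc1 _]].
  - pose proof (Rmin_r M1 x0); pose proof (Rmax_r M2 x0); lra.
  - intros; auto.
  - exists c. assert (g x0 <= g c) by (apply Hc1; split; [apply Rmin_r|apply Rmax_r]).
    intro x. destruct (Rle_dec x M1) as [Hx|Hx]; [specialize (H1 x Hx); lra|].
    destruct (Rle_dec M2 x) as [Hx'|Hx']; [specialize (H2 x Hx'); lra|].
    apply Hc1. pose proof (Rmin_l M1 x0); pose proof (Rmax_l M2 x0); lra.
Qed.

Lemma Derive_sign_attains_min (g : R -> R) : (forall z, ex_derive g z) ->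
  (exists M1, forall x, x <= M1 -> Derive g x < 0) ->
  (exists M2, forall x, M2 <= x -> 0 < Derive g x) ->
  exists c, forall x, g c <= g x.
Proof.
  intros Hd [M1 H1] [M2 H2].
  assert (HM : M1 < M2).
  { destruct (Rlt_dec M1 M2) as [?|Hn]; auto.
    specialize (H1 M2 ltac:(lra)). specialize (H2 M2 ltac:(lra)). lra. }
  destruct (continuity_ab_min g M1 M2) as [c [Hc _]];
    [lra|intros; apply ex_derive_continuity_pt; auto|].
  exists c. intro x. destruct (Rle_dec x M1) as [Hx|Hx]; [|destruct (Rle_dec M2 x) as [Hx'|Hx']].
  - assert (g M1 <= g x); [|pose proof (Hc M1 ltac:(lra)); lra].
    destruct (Req_dec x M1) as [->|]; [lra|].
    apply Rlt_le, Derive_neg_lt; [lra|auto|intros; apply H1; lra].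
  - assert (g M2 <= g x); [|pose proof (Hc M2 ltac:(lra)); lra].
    destruct (Req_dec x M2) as [->|]; [lra|].
    apply Rlt_le, Derive_pos_lt; [lra|auto|intros; apply H2; lra].
  - apply Hc; lra.
Qed.

Lemma is_lim_minus_scal (y p : R -> R) (x : Rbar) (A B l : R) :
  is_lim y x A -> is_lim p x B -> is_lim (fun r => y r - l * p r) x (A - l * B).
Proof.
  intros Hy Hp. apply (is_lim_minus _ _ _ _ _ _ Hy (is_lim_scal_l _ l _ _ Hp)). reflexivity.
Qed.

Lemma Rabs_bounded_on_segment (g : R -> R) a b : a <= b ->
  (forall x, a <= x <= b -> continuity_pt g x) ->
  exists H, 0 <= H /\ forall x, a <= x <= b -> Rabs (g x) <= H.
Proof.
  intros Hab Hc.
  destruct (continuity_ab_maj g a b Hab Hc) as [xM [HM _]].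
  destruct (continuity_ab_min g a b Hab Hc) as [xm [Hm _]].
  pose proof (Rle_abs (g xM)). pose proof (Rabs_maj2 (g xm)).
  pose proof (Rabs_pos (g xM)). pose proof (Rabs_pos (g xm)).
  exists (Rabs (g xM) + Rabs (g xm)). split; [lra|].
  intros x Hx. specialize (HM x Hx). specialize (Hm x Hx). apply Rabs_le_between. lra.
Qed.

Lemma Rabs_le_of_Derive_bound_l (h : R -> R) a b L : a <= b ->
  (forall z, a <= z <= b -> ex_derive h z /\ Rabs (Derive h z) <= L) -> h a = 0 ->
  forall x, a <= x <= b -> Rabs (h x) <= L * (x - a).
Proof.
  intros Hab H Ha x Hx.
  pose proof (Derive_dominated_segment h (fun z => L * z) a x ltac:(lra)) as D.
  rewrite Ha, Rminus_0_r in D. replace (L * (x - a)) with (L * x - L * a) by ring.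
  apply D. intros z Hz. destruct (H z ltac:(lra)) as [H1 H2]. split; [exact H1|]. split.
  - auto_derive; auto.
  - rewrite Derive_scal, Derive_id. lra.
Qed.

Lemma Rabs_le_of_Derive_bound_r (h : R -> R) a b L : a <= b ->
  (forall z, a <= z <= b -> ex_derive h z /\ Rabs (Derive h z) <= L) -> h b = 0 ->
  forall x, a <= x <= b -> Rabs (h x) <= L * (b - x).
Proof.
  intros Hab H Hb x Hx.
  pose proof (Derive_dominated_segment h (fun z => L * z) x b ltac:(lra)) as D.
  rewrite Hb, Rminus_0_l, Rabs_Ropp in D. replace (L * (b - x)) with (L * b - L * x) by ring.
  apply D. intros z Hz. destruct (H z ltac:(lra)) as [H1 H2]. split; [exact H1|]. split.
  - auto_derive; auto.
  - rewrite Derive_scal, Derive_id. lra.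
Qed.

Lemma Rabs_le_of_Derive2_bound_l (h : R -> R) a b H : a <= b ->
  (forall z, a <= z <= b ->
     ex_derive h z /\ ex_derive (Derive h) z /\ Rabs (Derive (Derive h) z) <= H) ->
  h a = 0 -> Derive h a = 0 ->
  forall x, a <= x <= b -> Rabs (h x) <= H / 2 * (x - a) ^ 2.
Proof.
  intros Hab Hd Ha Hda x Hx.
  assert (B1 : forall z, a <= z <= b -> Rabs (Derive h z) <= H * (z - a)).
  { apply Rabs_le_of_Derive_bound_l; auto. intros z Hz. apply Hd, Hz. }
  pose proof (Derive_dominated_segment h (fun z => H / 2 * (z - a) ^ 2) a x ltac:(lra)) as D.
  rewrite Ha, Rminus_0_r in D. simpl in D.
  replace (H / 2 * (x - a) ^ 2)
    with (H / 2 * ((x - a) * ((x - a) * 1)) - H / 2 * ((a - a) * ((a - a) * 1))) by ring.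
  apply D. intros z Hz. destruct (Hd z ltac:(lra)) as [H1 [H2 H3]]. split; [exact H1|]. split.
  - auto_derive; auto.
  - replace (Derive (fun z0 => H / 2 * ((z0 - a) * ((z0 - a) * 1))) z) with (H * (z - a))
      by (symmetry; apply is_derive_unique; auto_derive; auto; field).
    apply B1; lra.
Qed.

Lemma Rabs_le_of_Derive2_bound_r (h : R -> R) a b H : a <= b ->
  (forall z, a <= z <= b ->
     ex_derive h z /\ ex_derive (Derive h) z /\ Rabs (Derive (Derive h) z) <= H) ->
  h b = 0 -> Derive h b = 0 ->
  forall x, a <= x <= b -> Rabs (h x) <= H / 2 * (b - x) ^ 2.
Proof.
  intros Hab Hd Hb Hdb x Hx.
  assert (B1 : forall z, a <= z <= b -> Rabs (Derive h z) <= H * (b - z)).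
  { apply Rabs_le_of_Derive_bound_r; auto. intros z Hz. apply Hd, Hz. }
  pose proof (Derive_dominated_segment h (fun z => - (H / 2 * (b - z) ^ 2)) x b ltac:(lra)) as D.
  rewrite Hb, Rminus_0_l, Rabs_Ropp in D. simpl in D.
  replace (H / 2 * (b - x) ^ 2)
    with (- (H / 2 * ((b - b) * ((b - b) * 1))) - - (H / 2 * ((b - x) * ((b - x) * 1)))) by ring.
  apply D. intros z Hz. destruct (Hd z ltac:(lra)) as [H1 [H2 H3]]. split; [exact H1|]. split.
  - auto_derive; auto.
  - replace (Derive (fun z0 => - (H / 2 * ((b - z0) * ((b - z0) * 1)))) z) with (H * (b - z))
      by (symmetry; apply is_derive_unique; auto_derive; auto; field).
    apply B1; lra.
Qed.

Lemma Rmin_le_harmonic u v : 0 <= u -> 0 <= v -> 0 < u + v -> Rmin u v <= 2 * u * v / (u + v).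
Proof.
  intros Hu Hv Huv. apply Rle_div_r; [lra|].
  unfold Rmin; destruct (Rle_dec u v); nra.
Qed.

Lemma Rabs_le_of_vanishing_ends (h : R -> R) a b L : a < b ->
  (forall z, a <= z <= b -> ex_derive h z /\ Rabs (Derive h z) <= L) ->
  h a = 0 -> h b = 0 ->
  forall x, a <= x <= b -> Rabs (h x) <= 2 * L / (b - a) * ((x - a) * (b - x)).
Proof.
  intros Hab Hd Ha Hb x Hx.
  pose proof (Rabs_le_of_Derive_bound_l h a b L ltac:(lra) Hd Ha x Hx) as Bl.
  pose proof (Rabs_le_of_Derive_bound_r h a b L ltac:(lra) Hd Hb x Hx) as Br.
  pose proof (Rmin_le_harmonic (x - a) (b - x) ltac:(lra) ltac:(lra) ltac:(lra)) as Hm.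
  replace (x - a + (b - x)) with (b - a) in Hm by ring.
  assert (HL : 0 <= L) by (destruct (Hd a ltac:(lra)) as [_ HL]; pose proof (Rabs_pos (Derive h a)); lra).
  apply Rle_trans with (L * Rmin (x - a) (b - x)).
  - unfold Rmin; destruct (Rle_dec (x - a) (b - x)); lra.
  - replace (2 * L / (b - a) * ((x - a) * (b - x))) with (L * (2 * (x - a) * (b - x) / (b - a)))
      by (field; lra).
    apply Rmult_le_compat_l; assumption.
Qed.

Lemma Rabs_le_of_vanishing_ends2 (h : R -> R) a b H : a < b ->
  (forall z, a <= z <= b ->
     ex_derive h z /\ ex_derive (Derive h) z /\ Rabs (Derive (Derive h) z) <= H) ->
  h a = 0 -> Derive h a = 0 -> h b = 0 -> Derive h b = 0 ->
  forall x, a <= x <= b -> Rabs (h x) <= 2 * H / (b - a) ^ 2 * ((x - a) * (b - x)) ^ 2.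
Proof.
  intros Hab Hd Ha Hda Hb Hdb x Hx.
  pose proof (Rabs_le_of_Derive2_bound_l h a b H ltac:(lra) Hd Ha Hda x Hx) as Bl.
  pose proof (Rabs_le_of_Derive2_bound_r h a b H ltac:(lra) Hd Hb Hdb x Hx) as Br.
  pose proof (Rmin_le_harmonic (x - a) (b - x) ltac:(lra) ltac:(lra) ltac:(lra)) as Hm.
  replace (x - a + (b - x)) with (b - a) in Hm by ring.
  assert (HH : 0 <= H).
  { destruct (Hd a ltac:(lra)) as [_ [_ HH]]. pose proof (Rabs_pos (Derive (Derive h) a)). lra. }
  assert (Hm0 : 0 <= Rmin (x - a) (b - x)) by (apply Rmin_glb; lra).
  apply Rle_trans with (H / 2 * Rmin (x - a) (b - x) ^ 2).
  - unfold Rmin; destruct (Rle_dec (x - a) (b - x)); lra.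
  - replace (2 * H / (b - a) ^ 2 * ((x - a) * (b - x)) ^ 2)
      with (H / 2 * (2 * (x - a) * (b - x) / (b - a)) ^ 2) by (field; lra).
    apply Rmult_le_compat_l; [lra|]. apply pow_incr. lra.
Qed.

Lemma exp_le_exp x y : x <= y -> exp x <= exp y.
Proof. intro H. destruct (Req_dec x y) as [->|]; [lra|]. apply Rlt_le, exp_increasing; lra. Qed.

Definition logistic_density x := exp x / (1 + exp x) ^ 2.

Lemma logistic_density_pos x : 0 < logistic_density x.
Proof.
  unfold logistic_density. pose proof (exp_pos x). apply Rdiv_lt_0_compat; nra.
Qed.

Lemma logistic_density_le_quarter x : logistic_density x <= / 4.
Proof.
  unfold logistic_density. pose proof (exp_pos x). set (E := exp x) in *.
  apply Rle_div_l; [nra|]. pose proof (pow2_ge_0 (1 - E)). nra.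
Qed.

Lemma logistic_density_shift_le x y :
  logistic_density y <= exp (Rabs (y - x)) * logistic_density x.
Proof.
  unfold logistic_density.
  assert (HD1 : exp y <= exp (Rabs (y - x)) * exp x).
  { rewrite <- exp_plus. apply exp_le_exp. pose proof (Rle_abs (y - x)). lra. }
  assert (HD2 : exp x <= exp (Rabs (y - x)) * exp y).
  { rewrite <- exp_plus, Rabs_minus_sym. apply exp_le_exp. pose proof (Rle_abs (x - y)). lra. }
  pose proof (exp_pos x). pose proof (exp_pos y).
  set (E := exp x) in *. set (F := exp y) in *. set (D := exp (Rabs (y - x))) in *.
  assert (K : F * (1 + E) ^ 2 <= D * E * (1 + F) ^ 2).
  { destruct (Rle_dec E F).
    - apply Rle_trans with (F * (1 + F) ^ 2); [|apply Rmult_le_compat_r; [nra|lra]].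
      apply Rmult_le_compat_l; [lra|]. apply pow_incr. lra.
    - apply Rmult_le_reg_l with F; [lra|].
      apply Rle_trans with (E * E * (1 + F) ^ 2).
      2:{ replace (E * E * (1 + F) ^ 2) with (E * (E * (1 + F) ^ 2)) by ring.
          replace (F * (D * E * (1 + F) ^ 2)) with (D * F * (E * (1 + F) ^ 2)) by ring.
          apply Rmult_le_compat_r; [nra|lra]. }
      assert (F * (1 + E) <= E * (1 + F)) by nra.
      replace (F * (F * (1 + E) ^ 2)) with ((F * (1 + E)) ^ 2) by ring.
      replace (E * E * (1 + F) ^ 2) with ((E * (1 + F)) ^ 2) by ring.
      apply pow_incr. nra. }
  apply Rle_div_l; [nra|].
  replace (D * (E / (1 + E) ^ 2) * (1 + F) ^ 2) with (D * E * (1 + F) ^ 2 / (1 + E) ^ 2)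
    by (field; nra).
  apply Rle_div_r; [nra|]. lra.
Qed.

Lemma logistic_density_logit u v : 0 < u -> 0 < v ->
  u * v = (u + v) ^ 2 * logistic_density (ln u - ln v).
Proof.
  intros Hu Hv. unfold logistic_density.
  rewrite <- ln_div, exp_ln by (try apply Rdiv_lt_0_compat; lra).
  field. lra.
Qed.

Lemma Rabs_ln_diff_le x y lo hi : 0 < lo -> lo <= x <= hi -> lo <= y <= hi ->
  Rabs (ln x - ln y) <= ln (hi / lo).
Proof.
  intros Hlo Hx Hy. rewrite ln_div by lra. apply Rabs_le_between.
  pose proof (ln_le lo x Hlo (proj1 Hx)). pose proof (ln_le x hi ltac:(lra) (proj2 Hx)).
  pose proof (ln_le lo y Hlo (proj1 Hy)). pose proof (ln_le y hi ltac:(lra) (proj2 Hy)).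
  lra.
Qed.

(** For [sigma = 1] this bounds [x / y] below by [l / 2], for [sigma = -1] above by [2 l]. *)
Lemma signed_ln_ratio_ge sigma l d x y : sigma = 1 \/ sigma = -1 ->
  0 < l -> 0 <= d <= l / 2 -> 0 < x -> 0 < y ->
  sigma * ((l - sigma * d) * y) <= sigma * x -> - ln 2 <= sigma * (ln (x / y) - ln l).
Proof.
  intros Hs Hl Hd Hx Hy H.
  destruct Hs as [->| ->].
  - assert (E : ln (l / 2) = ln l - ln 2) by (apply ln_div; lra).
    assert (ln (l / 2) <= ln (x / y)).
    { apply ln_le; [lra|]. apply (Rle_div_r _ _ _ Hy). nra. }
    lra.
  - assert (E : ln (2 * l) = ln 2 + ln l) by (apply ln_mult; lra).
    assert (ln (x / y) <= ln (2 * l)).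
    { apply ln_le; [apply Rdiv_lt_0_compat; lra|]. apply (Rle_div_l _ _ _ Hy). nra. }
    lra.
Qed.

(** * Momentum profiles *)

(** [phi] is the momentum profile of a Calabi-symmetric metric, [u'' = phi (u')], on the
    moment interval [[a, b]]. *)
Section Momentum_profile.

Variables (a b K : R) (phi : R -> R).
Hypotheses (Hab : a < b) (HK : 0 < K) (Hs : smooth phi)
  (Hpa : phi a = 0) (Hpb : phi b = 0) (Hda : Derive phi a = K) (Hdb : Derive phi b = - K).

Let D1 := smooth_ex_derive _ Hs.
Let D2 := smooth_ex_derive _ (smooth_Derive _ Hs).
Let D3 := smooth_ex_derive _ (smooth_Derive _ (smooth_Derive _ Hs)).

Lemma Derive2_profile_bounded :
  exists H, 0 <= H /\ forall x, a <= x <= b -> Rabs (Derive (Derive phi) x) <= H.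
Proof. apply Rabs_bounded_on_segment; [lra|]. intros; apply ex_derive_continuity_pt, D3. Qed.

Lemma profile_second_order : exists C, 0 <= C /\ forall x, a < x < b ->
  Rabs ((b - a) * phi x - K * ((x - a) * (b - x))) <= C * ((x - a) * (b - x)) ^ 2.
Proof.
  destruct Derive2_profile_bounded as [H [HH HB]].
  set (h := fun x => (b - a) * phi x - K * ((x - a) * (b - x))).
  assert (E1 : forall x, Derive h x = (b - a) * Derive phi x + K * (2 * x - a - b)).
  { intro x. apply is_derive_unique. unfold h. auto_derive; auto.
    normalize_Derive. ring. }
  assert (E2 : forall x, Derive (Derive h) x = (b - a) * Derive (Derive phi) x + 2 * K).
  { intro x. rewrite (Derive_ext _ _ x E1). apply is_derive_unique. auto_derive; auto.
    normalize_Derive. ring. }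
  exists (2 * ((b - a) * H + 2 * K) / (b - a) ^ 2). split.
  { apply Rmult_le_pos; [nra|apply Rlt_le, Rinv_0_lt_compat; nra]. }
  intros x Hx. apply (Rabs_le_of_vanishing_ends2 h a b); try lra.
  - intros z Hz. split; [unfold h; auto_derive; auto|]. split.
    + apply (ex_derive_ext (fun x => (b - a) * Derive phi x + K * (2 * x - a - b)));
        [intro; symmetry; apply E1|]. auto_derive; auto.
    + rewrite E2. eapply Rle_trans; [apply Rabs_triang|].
      rewrite Rabs_mult, (Rabs_right (b - a)), (Rabs_right (2 * K)) by lra.
      specialize (HB z Hz). nra.
  - unfold h. rewrite Hpa. ring.
  - rewrite E1, Hda. ring.
  - unfold h. rewrite Hpb. ring.
  - rewrite E1, Hdb. ring.
Qed.

Lemma profile_slope_defect N T : 0 < T -> a = (N - K) * T -> b = (N + K) * T ->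
  exists L, 0 <= L /\ forall x, a < x < b ->
    Rabs (N - Derive phi x - x / T) <= L * ((x - a) * (b - x)).
Proof.
  intros HT Ha Hb. destruct Derive2_profile_bounded as [H [HH HB]].
  set (Fx := fun x => N - Derive phi x - x / T).
  exists (2 * (H + / T) / (b - a)). split.
  { pose proof (Rinv_0_lt_compat T HT).
    apply Rmult_le_pos; [lra|apply Rlt_le, Rinv_0_lt_compat; lra]. }
  intros x Hx. apply (Rabs_le_of_vanishing_ends Fx a b); try lra.
  - intros z Hz. split; [unfold Fx; auto_derive; auto|].
    replace (Derive Fx z) with (- Derive (Derive phi) z - / T)
      by (symmetry; apply is_derive_unique; unfold Fx; auto_derive; auto;
          normalize_Derive; field; lra).
    eapply Rle_trans; [apply Rabs_triang|].
    rewrite !Rabs_Ropp, (Rabs_right (/ T)) by (apply Rle_ge, Rlt_le, Rinv_0_lt_compat; lra).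
    specialize (HB z Hz). lra.
  - unfold Fx. rewrite Hda, Ha. field. lra.
  - unfold Fx. rewrite Hdb, Hb. field. lra.
Qed.

Lemma profile_upper : exists M, forall x, a < x < b -> phi x <= M * ((x - a) * (b - x)).
Proof.
  destruct profile_second_order as [C [HC P3]].
  exists ((K + C * (b - a) ^ 2 / 4) / (b - a)). intros x Hx.
  assert (Huv : 0 <= (x - a) * (b - x) <= (b - a) ^ 2 / 4)
    by (split; [nra|pose proof (pow2_ge_0 (x - a - (b - x))); nra]).
  pose proof (P3 x Hx) as P. apply Rabs_le_between in P.
  assert (C * ((x - a) * (b - x)) ^ 2 <= C * (b - a) ^ 2 / 4 * ((x - a) * (b - x))).
  { replace (C * ((x - a) * (b - x)) ^ 2) with ((C * ((x - a) * (b - x))) * ((x - a) * (b - x)))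
      by ring.
    replace (C * (b - a) ^ 2 / 4 * ((x - a) * (b - x)))
      with ((C * ((x - a) * (b - x))) * ((b - a) ^ 2 / 4)) by field.
    apply Rmult_le_compat_l; [apply Rmult_le_pos|]; lra. }
  apply (Rmult_le_reg_l (b - a)); [lra|].
  replace ((b - a) * ((K + C * (b - a) ^ 2 / 4) / (b - a) * ((x - a) * (b - x))))
    with ((K + C * (b - a) ^ 2 / 4) * ((x - a) * (b - x))) by (field; lra).
  lra.
Qed.

Hypothesis Hpos : forall x, a < x < b -> 0 < phi x.

Lemma profile_lower_interior d : 0 < d ->
  exists m0, 0 < m0 /\ forall x, a + d <= x <= b - d -> m0 <= phi x.
Proof.
  intro Hd0.
  destruct (Rle_dec (a + d) (b - d)) as [Hd|Hd]; [|exists 1; split; [lra|intros; lra]].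
  destruct (continuity_ab_min phi (a + d) (b - d)) as [y0 [Hy0 Hy1]]; auto.
  - intros; apply ex_derive_continuity_pt, D1.
  - exists (phi y0). split; auto. apply Hpos; lra.
Qed.

(** Near the ends the parabola dominates [phi]; in between [phi] is bounded below by
    compactness. *)
Lemma profile_lower : exists m, 0 < m /\ forall x, a < x < b -> m * ((x - a) * (b - x)) <= phi x.
Proof.
  destruct profile_second_order as [C [HC P3]].
  set (dl := K / (2 * (C + 1)) / (b - a)).
  assert (Hdl : 0 < dl) by (unfold dl; apply Rdiv_lt_0_compat; [apply Rdiv_lt_0_compat|]; lra).
  destruct (profile_lower_interior dl Hdl) as [m0 [Hm0p Hm0]].
  exists (Rmin (K / (2 * (b - a))) (4 * m0 / (b - a) ^ 2)).
  split; [apply Rmin_pos; apply Rdiv_lt_0_compat; nra|].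
  intros x Hx. set (m := Rmin _ _). set (u := x - a) in *. set (v := b - x) in *.
  assert (Hu : 0 < u) by (unfold u; lra). assert (Hv : 0 < v) by (unfold v; lra).
  assert (Huv : u + v = b - a) by (unfold u, v; ring).
  assert (Hamgm : u * v <= (b - a) ^ 2 / 4) by (rewrite <- Huv; pose proof (pow2_ge_0 (u - v)); nra).
  pose proof (P3 x Hx) as P3x. fold u v in P3x. apply Rabs_le_between in P3x.
  destruct (Rle_dec (u * v) (K / (2 * (C + 1)))) as [Hsm|Hsm].
  - assert (m <= K / (2 * (b - a))) by apply Rmin_l.
    assert (K / 2 * (u * v) <= (b - a) * phi x).
    { assert ((C + 1) * (u * v) <= K / 2).
      { apply (Rmult_le_compat_l (C + 1)) in Hsm; [|lra].
        replace ((C + 1) * (K / (2 * (C + 1)))) with (K / 2) in Hsm by (field; lra). exact Hsm. }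
      assert (0 < u * v) by nra.
      assert (C * (u * v) ^ 2 <= (C + 1) * (u * v) * (u * v)) by nra.
      assert ((C + 1) * (u * v) * (u * v) <= K / 2 * (u * v)) by (apply Rmult_le_compat_r; lra).
      lra. }
    apply Rle_trans with (K / (2 * (b - a)) * (u * v)); [apply Rmult_le_compat_r; nra|].
    apply (Rmult_le_reg_l (b - a)); [lra|].
    replace ((b - a) * (K / (2 * (b - a)) * (u * v))) with (K / 2 * (u * v)) by (field; lra). lra.
  - assert (m <= 4 * m0 / (b - a) ^ 2) by apply Rmin_r.
    assert (HK2 : K / (2 * (C + 1)) = dl * (b - a)) by (unfold dl; field; lra).
    assert (u > dl) by (apply (Rmult_lt_reg_r (b - a)); nra).
    assert (v > dl) by (apply (Rmult_lt_reg_r (b - a)); nra).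
    assert (m0 <= phi x) by (apply Hm0; unfold u, v in *; lra).
    apply Rle_trans with (4 * m0 / (b - a) ^ 2 * (u * v)); [apply Rmult_le_compat_r; nra|].
    apply (Rmult_le_reg_l ((b - a) ^ 2)); [nra|].
    replace ((b - a) ^ 2 * (4 * m0 / (b - a) ^ 2 * (u * v))) with (4 * m0 * (u * v)) by (field; lra).
    apply Rle_trans with (m0 * (b - a) ^ 2); [nra|].
    rewrite Rmult_comm. apply Rmult_le_compat_l; nra.
Qed.

End Momentum_profile.

(** * Convex potentials *)

Record convex_potential (a b : R) (f : R -> R) : Prop := {
  cp_smooth : smooth f;
  cp_convex : forall r, 0 < Derive_n f 2 r;
  cp_lim_m_infty : filterlim (Derive f) (Rbar_locally m_infty) (locally a);
  cp_lim_p_infty : filterlim (Derive f) (Rbar_locally p_infty) (locally b) }.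

Lemma convex_potential_slope a b f : convex_potential a b f -> forall r, a < Derive f r < b.
Proof.
  intros [Hs H2 Ha Hb]. apply increasing_between_limits; auto.
  apply smooth_ex_derive, smooth_Derive, Hs.
Qed.

(** With [omega = i dd^c f(rho)] we have [Ric(omega) = i dd^c (N rho - log (f'^(N-1) f''))], so
    [ricci_defect N T f] is a radial potential of [Ric(omega) - omega / T]. *)
Definition ricci_defect (N T : R) (f : R -> R) r :=
  N * r - (N - 1) * ln (Derive f r) - ln (Derive_n f 2 r) - f r / T.

Definition ricci_defect_slope (N T : R) (f : R -> R) r :=
  N - (N - 1) * (Derive_n f 2 r / Derive f r) - Derive_n f 3 r / Derive_n f 2 r - Derive f r / T.

Lemma is_derive_ricci_defect N T f : 0 < T -> smooth f ->
  (forall r, 0 < Derive f r) -> (forall r, 0 < Derive_n f 2 r) ->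
  forall r, is_derive (ricci_defect N T f) r (ricci_defect_slope N T f r).
Proof.
  intros HT Hs H1 H2 r.
  pose proof (smooth_ex_derive _ Hs). pose proof (smooth_ex_derive _ (smooth_Derive _ Hs)).
  pose proof (smooth_ex_derive _ (smooth_Derive _ (smooth_Derive _ Hs))).
  specialize (H1 r). specialize (H2 r). change (0 < Derive (Derive f) r) in H2.
  unfold ricci_defect, ricci_defect_slope. simpl. auto_derive.
  - repeat split; auto.
  - normalize_Derive. field. repeat split; apply Rgt_not_eq; auto.
Qed.

Section Initial_potential.

Variables (N K T a b : R) (f phi : R -> R).
Hypotheses (HT : 0 < T) (HK : 0 < K) (HN : K + 1 <= N)
  (Ha : a = (N - K) * T) (Hb : b = (N + K) * T) (Hf : convex_potential a b f)
  (Hphi : smooth phi) (Hpa : phi a = 0) (Hpb : phi b = 0)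
  (Hda : Derive phi a = K) (Hdb : Derive phi b = - K)
  (Hprofile : forall r, phi (Derive f r) = Derive_n f 2 r).

Let Hab : a < b. Proof. rewrite Ha, Hb; nra. Qed.
Let Ha0 : 0 < a. Proof. rewrite Ha; nra. Qed.
Let Hs := cp_smooth _ _ _ Hf.
Let Hconv := cp_convex _ _ _ Hf.
Let Hslope := convex_potential_slope _ _ _ Hf.
Let Hslope_pos : forall r, 0 < Derive f r. Proof. intro r; pose proof (Hslope r); lra. Qed.

Lemma profile_pos : forall x, a < x < b -> 0 < phi x.
Proof.
  intros x Hx.
  destruct (continuous_limits_surjective (Derive f) a b) with x as [r <-];
    [|apply (cp_lim_m_infty _ _ _ Hf)|apply (cp_lim_p_infty _ _ _ Hf)|exact Hx|].
  - intro; apply ex_derive_continuity_pt, smooth_ex_derive, smooth_Derive, Hs.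
  - rewrite Hprofile. apply Hconv.
Qed.

Lemma convex_potential_D3 r : Derive_n f 3 r = Derive_n f 2 r * Derive phi (Derive f r).
Proof.
  change (Derive (Derive_n f 2) r = Derive_n f 2 r * Derive phi (Derive f r)).
  rewrite <- (Derive_ext _ _ r Hprofile), Derive_comp; [reflexivity|apply smooth_ex_derive, Hphi|].
  apply smooth_ex_derive, smooth_Derive, Hs.
Qed.

Lemma convex_potential_D2_comparable : exists m M, 0 < m /\ forall r,
  m * ((Derive f r - a) * (b - Derive f r)) <= Derive_n f 2 r <=
  M * ((Derive f r - a) * (b - Derive f r)).
Proof.
  destruct (profile_lower a b K phi Hab HK Hphi Hpa Hpb Hda Hdb profile_pos) as [m [Hm Hl]].
  destruct (profile_upper a b K phi Hab HK Hphi Hpa Hpb Hda Hdb) as [M Hu].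
  exists m, M. split; [exact Hm|]. intro r. rewrite <- Hprofile.
  split; [apply Hl|apply Hu]; apply Hslope.
Qed.

Lemma slope_defect : exists L, 0 <= L /\ forall r,
  Rabs (N - Derive phi (Derive f r) - Derive f r / T) <=
  L * ((Derive f r - a) * (b - Derive f r)).
Proof.
  destruct (profile_slope_defect a b K phi Hab Hphi Hda Hdb N T HT Ha Hb) as [L [HL H]].
  exists L. split; [exact HL|]. intro r. apply H, Hslope.
Qed.

Lemma slope_gap_le r : (Derive f r - a) * (b - Derive f r) <= (b - a) ^ 2 / 4.
Proof. pose proof (pow2_ge_0 (Derive f r - a - (b - Derive f r))). nra. Qed.

Lemma convex_potential_D3_le :
  exists K3, 0 <= K3 /\ forall r, Rabs (Derive_n f 3 r) <= K3 * Derive_n f 2 r.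
Proof.
  destruct slope_defect as [L [HL HFx]].
  exists (K + L * ((b - a) ^ 2 / 4)). split; [pose proof (pow2_ge_0 (b - a)); nra|].
  intro r. rewrite convex_potential_D3, Rabs_mult, (Rabs_right (Derive_n f 2 r))
    by (apply Rle_ge, Rlt_le, Hconv).
  rewrite Rmult_comm. apply Rmult_le_compat_r; [apply Rlt_le, Hconv|].
  specialize (HFx r). apply Rabs_le_between in HFx. pose proof (slope_gap_le r).
  assert (N - K < Derive f r / T < N + K).
  { pose proof (Hslope r). split; [apply (Rlt_div_r _ _ T HT)|apply (Rlt_div_l _ _ T HT)]; nra. }
  assert (L * ((Derive f r - a) * (b - Derive f r)) <= L * ((b - a) ^ 2 / 4))
    by (apply Rmult_le_compat_l; auto).
  apply Rabs_le_between. lra.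
Qed.

Lemma ricci_defect_slope_le :
  exists Kc, 0 <= Kc /\ forall r, Rabs (ricci_defect_slope N T f r) <= Kc * Derive_n f 2 r.
Proof.
  destruct slope_defect as [L [HL HFx]].
  destruct convex_potential_D2_comparable as [m [M [Hm Hmuv]]].
  exists (L / m + (N - 1) / a). split.
  { apply Rplus_le_le_0_compat; apply Rmult_le_pos; try lra; apply Rlt_le, Rinv_0_lt_compat; lra. }
  intro r. pose proof (Hconv r) as Hq. pose proof (Hslope r) as Hp.
  assert (E : ricci_defect_slope N T f r = (N - Derive phi (Derive f r) - Derive f r / T) -
      (N - 1) * (Derive_n f 2 r / Derive f r)).
  { unfold ricci_defect_slope. rewrite convex_potential_D3. field. lra. }
  rewrite E. eapply Rle_trans; [apply Rabs_triang|]. rewrite Rabs_Ropp, Rmult_plus_distr_r.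
  apply Rplus_le_compat.
  - eapply Rle_trans; [apply HFx|].
    replace (L / m * Derive_n f 2 r) with (L * (Derive_n f 2 r / m)) by (field; lra).
    apply Rmult_le_compat_l; [exact HL|]. apply (Rle_div_r _ _ m Hm). rewrite Rmult_comm. apply Hmuv.
  - rewrite Rabs_right by (apply Rle_ge, Rmult_le_pos; [lra|apply Rlt_le, Rdiv_lt_0_compat; lra]).
    replace ((N - 1) / a * Derive_n f 2 r) with ((N - 1) * (Derive_n f 2 r / a)) by (field; lra).
    apply Rmult_le_compat_l; [lra|]. unfold Rdiv. apply Rmult_le_compat_l; [lra|].
    apply Rinv_le_contravar; lra.
Qed.

Lemma ricci_defect_slope_bounded :
  exists KD, 0 <= KD /\ forall r, Rabs (ricci_defect_slope N T f r) <= KD.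
Proof.
  destruct ricci_defect_slope_le as [Kc [HKc H]].
  destruct (Rabs_bounded_on_segment phi a b) as [P [HP HPb]];
    [lra|intros; apply ex_derive_continuity_pt, smooth_ex_derive, Hphi|].
  exists (Kc * P). split; [apply Rmult_le_pos; assumption|].
  intro r. eapply Rle_trans; [apply H|]. apply Rmult_le_compat_l; [exact HKc|].
  rewrite <- Hprofile. eapply Rle_trans; [apply Rle_abs|]. apply HPb.
  pose proof (Hslope r); lra.
Qed.

Lemma ricci_defect_oscillation :
  exists KF, 0 <= KF /\ forall r z, Rabs (ricci_defect N T f r - ricci_defect N T f z) <= KF.
Proof.
  destruct ricci_defect_slope_le as [Kc [HKc H]].
  exists (Kc * (b - a)). split; [apply Rmult_le_pos; lra|]. intros r z.
  eapply Rle_trans; [apply (Derive_dominated (ricci_defect N T f) (fun r => Kc * Derive f r))|].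
  - intro x. pose proof (is_derive_ricci_defect N T f HT Hs Hslope_pos Hconv x) as Hd.
    split; [eexists; exact Hd|]. split.
    + auto_derive. apply smooth_ex_derive, smooth_Derive, Hs.
    + rewrite (is_derive_unique _ _ _ Hd), Derive_scal. apply H.
  - rewrite <- Rmult_minus_distr_l, Rabs_mult, (Rabs_right Kc) by lra.
    apply Rmult_le_compat_l; [exact HKc|]. apply Rabs_le_between.
    pose proof (Hslope r); pose proof (Hslope z); lra.
Qed.

Lemma slope_logit_bounded : exists D0, 0 <= D0 /\ forall r,
  Rabs (ln (Derive f r - a) - ln (b - Derive f r) - K * r) <= D0.
Proof.
  destruct (profile_second_order a b K phi Hab HK Hphi Hpa Hpb Hda Hdb) as [C [HC P3]].
  destruct convex_potential_D2_comparable as [m [M [Hm Hmuv]]].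
  set (lK := fun r => ln (Derive f r - a) - ln (b - Derive f r) - K * r).
  assert (Dl : forall r, is_derive lK r
      (Derive_n f 2 r / (Derive f r - a) + Derive_n f 2 r / (b - Derive f r) - K)).
  { intro r. unfold lK. pose proof (Hslope r). auto_derive.
    - pose proof (smooth_ex_derive _ (smooth_Derive _ Hs) r). repeat split; auto; lra.
    - normalize_Derive. field. split; lra. }
  assert (Dlb : forall r, Rabs (Derive_n f 2 r / (Derive f r - a) +
      Derive_n f 2 r / (b - Derive f r) - K) <= C / m * Derive_n f 2 r).
  { intro r. rewrite <- !Hprofile. pose proof (Hslope r). set (p := Derive f r) in *.
    assert (Huv : 0 < (p - a) * (b - p)) by nra.
    replace (phi p / (p - a) + phi p / (b - p) - K) with
      (((b - a) * phi p - K * ((p - a) * (b - p))) / ((p - a) * (b - p))) by (field; lra).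
    unfold Rdiv at 1. rewrite Rabs_mult, (Rabs_right (/ _)) by (apply Rle_ge, Rlt_le, Rinv_0_lt_compat, Huv).
    apply Rle_trans with (C * ((p - a) * (b - p)) ^ 2 * / ((p - a) * (b - p))).
    { apply Rmult_le_compat_r; [apply Rlt_le, Rinv_0_lt_compat, Huv|]. apply P3; lra. }
    replace (C * ((p - a) * (b - p)) ^ 2 * / ((p - a) * (b - p))) with (C * ((p - a) * (b - p)))
      by (field; lra).
    replace (C / m * phi p) with (C * (phi p / m)) by (field; lra).
    apply Rmult_le_compat_l; [exact HC|]. apply (Rle_div_r _ _ m Hm).
    rewrite Rmult_comm. unfold p. rewrite Hprofile. apply Hmuv. }
  assert (HCm : 0 <= C / m) by (apply Rmult_le_pos; [lra|apply Rlt_le, Rinv_0_lt_compat, Hm]).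
  exists (C / m * (b - a) + Rabs (lK 0)). split; [pose proof (Rabs_pos (lK 0)); nra|].
  intro r. fold (lK r).
  assert (X : Rabs (lK r - lK 0) <= C / m * (b - a)).
  { eapply Rle_trans; [apply (Derive_dominated lK (fun r => C / m * Derive f r))|].
    - intro z. split; [eexists; apply Dl|]. split.
      + auto_derive. apply smooth_ex_derive, smooth_Derive, Hs.
      + rewrite (is_derive_unique _ _ _ (Dl z)), Derive_scal. apply Dlb.
    - rewrite <- Rmult_minus_distr_l, Rabs_mult, (Rabs_right (C / m)) by lra.
      apply Rmult_le_compat_l; [exact HCm|]. apply Rabs_le_between.
      pose proof (Hslope r); pose proof (Hslope 0); lra. }
  pose proof (Rabs_triang (lK r - lK 0) (lK 0)).
  replace (lK r - lK 0 + lK 0) with (lK r) in * by ring. lra.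
Qed.

Lemma convex_potential_D2_logistic : exists m1 M1, 0 < m1 /\ 0 < M1 /\ forall r,
  m1 * logistic_density (K * r) <= Derive_n f 2 r <= M1 * logistic_density (K * r).
Proof.
  destruct convex_potential_D2_comparable as [m [M [Hm Hmuv]]].
  destruct slope_logit_bounded as [D0 [HD0 HlK]].
  assert (HM : 0 < M).
  { destruct (Hmuv 0) as [_ H]. pose proof (Hconv 0). pose proof (Hslope 0).
    assert (0 < (Derive f 0 - a) * (b - Derive f 0)) by nra. nra. }
  assert (Hba : 0 < (b - a) ^ 2) by nra.
  exists (m * (b - a) ^ 2 * exp (- D0)), (M * (b - a) ^ 2 * exp D0).
  split; [pose proof (exp_pos (- D0)); apply Rmult_lt_0_compat; [nra|lra]|].
  split; [pose proof (exp_pos D0); apply Rmult_lt_0_compat; [nra|lra]|].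
  intro r. pose proof (Hslope r) as Hp. destruct (Hmuv r) as [A B].
  set (l := ln (Derive f r - a) - ln (b - Derive f r)).
  assert (Y : (Derive f r - a) * (b - Derive f r) = (b - a) ^ 2 * logistic_density l).
  { unfold l. rewrite logistic_density_logit by lra. f_equal. ring. }
  assert (X : exp (Rabs (l - K * r)) <= exp D0) by (apply exp_le_exp, HlK).
  pose proof (logistic_density_shift_le l (K * r)) as R1.
  pose proof (logistic_density_shift_le (K * r) l) as R2.
  rewrite Rabs_minus_sym in R1.
  pose proof (logistic_density_pos (K * r)). pose proof (logistic_density_pos l).
  pose proof (exp_pos (Rabs (l - K * r))).
  rewrite Y in A, B. split.
  - rewrite exp_Ropp.
    assert (logistic_density (K * r) <= exp D0 * logistic_density l)
      by (eapply Rle_trans; [apply R1|]; apply Rmult_le_compat_r; lra).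
    apply Rle_trans with (m * (b - a) ^ 2 * logistic_density l); [|lra].
    replace (m * (b - a) ^ 2 * / exp D0 * logistic_density (K * r))
      with (m * (b - a) ^ 2 * (logistic_density (K * r) / exp D0)) by (field; pose proof (exp_pos D0); lra).
    apply Rmult_le_compat_l; [nra|]. apply (Rle_div_l _ _ _ (exp_pos D0)). lra.
  - assert (logistic_density l <= exp D0 * logistic_density (K * r))
      by (eapply Rle_trans; [apply R2|]; apply Rmult_le_compat_r; lra).
    apply Rle_trans with (M * (b - a) ^ 2 * logistic_density l); [lra|].
    replace (M * (b - a) ^ 2 * exp D0 * logistic_density (K * r))
      with (M * (b - a) ^ 2 * (exp D0 * logistic_density (K * r))) by ring.
    apply Rmult_le_compat_l; [nra|lra].
Qed.

End Initial_potential.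

(** * The flow estimates *)

Section Flow.

Variables (n : nat) (N K T t c : R) (f f0 : R -> R).
Hypotheses (HN : N = INR n) (Hn : (1 <= n)%nat) (HT : 0 < T) (HK : 0 < K) (HNK : K + 1 <= N)
  (Ht : 0 < t < T)
  (Hf : convex_potential ((N - K) * (T - t)) ((N + K) * (T - t)) f)
  (Hf0 : convex_potential ((N - K) * T) ((N + K) * T) f0)
  (Hc : forall r, f r - f0 r + t * N * r - t * ln ((Derive f r) ^ (n - 1) * Derive_n f 2 r) = c).

Let s := T - t.
Let Hs : 0 < s. Proof. unfold s; lra. Qed.
Let HsT : 0 < s / T. Proof. apply Rdiv_lt_0_compat; [exact Hs|exact HT]. Qed.

Let smooth_f := cp_smooth _ _ _ Hf.
Let smooth_f0 := cp_smooth _ _ _ Hf0.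
Let Hy := convex_potential_slope _ _ _ Hf.
Let Hp := convex_potential_slope _ _ _ Hf0.
Let Hy2 := cp_convex _ _ _ Hf.
Let Hp2 := cp_convex _ _ _ Hf0.
Let Hy_pos : forall r, 0 < Derive f r. Proof. intro r; pose proof (Hy r); unfold s; nra. Qed.
Let Hp_pos : forall r, 0 < Derive f0 r. Proof. intro r; pose proof (Hp r); nra. Qed.

Let df1 := smooth_ex_derive _ smooth_f.
Let df2 := smooth_ex_derive _ (smooth_Derive _ smooth_f).
Let df3 := smooth_ex_derive _ (smooth_Derive _ (smooth_Derive _ smooth_f)).
Let dg1 := smooth_ex_derive _ smooth_f0.
Let dg2 := smooth_ex_derive _ (smooth_Derive _ smooth_f0).
Let dg3 := smooth_ex_derive _ (smooth_Derive _ (smooth_Derive _ smooth_f0)).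

Let xi r := Derive f r - s / T * Derive f0 r.
Let psi r := (f r - s / T * f0 r) / t.
Let Phi r := ln (Derive_n f 2 r / Derive_n f0 2 r) + (N - 1) * ln (Derive f r / Derive f0 r).
Let DPhi r := Derive_n f 3 r / Derive_n f 2 r - Derive_n f0 3 r / Derive_n f0 2 r +
  (N - 1) * (Derive_n f 2 r / Derive f r - Derive_n f0 2 r / Derive f0 r).

Lemma flow_log_identity r : Phi r = psi r + ricci_defect N T f0 r - c / t.
Proof.
  assert (HN1 : INR (n - 1) = N - 1) by (rewrite minus_INR by exact Hn; simpl; lra).
  pose proof (Hc r) as E. rewrite ln_mult, ln_pow, HN1 in E by (try apply pow_lt; auto).
  unfold Phi, psi, ricci_defect. rewrite !ln_div by auto. rewrite <- E. unfold s. field. lra.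
Qed.

Lemma is_derive_Phi r : is_derive Phi r (DPhi r).
Proof.
  unfold Phi, DPhi. pose proof (Hy_pos r). pose proof (Hp_pos r).
  pose proof (Hy2 r). pose proof (Hp2 r). simpl in *. auto_derive.
  - repeat split; try assumption; try (apply Rdiv_lt_0_compat; assumption);
      try (apply Rgt_not_eq; assumption); auto.
  - normalize_Derive. field. repeat split; apply Rgt_not_eq; auto.
Qed.

Lemma is_derive_psi r : is_derive psi r (xi r / t).
Proof.
  unfold psi, xi. auto_derive; auto.
  normalize_Derive. field. lra.
Qed.

Lemma flow_slope_identity r : DPhi r = xi r / t + ricci_defect_slope N T f0 r.
Proof.
  rewrite <- (is_derive_unique _ _ _ (is_derive_Phi r)), (Derive_ext _ _ r flow_log_identity).
  apply is_derive_unique. auto_derive.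
  - repeat split; [eexists; apply is_derive_psi|].
    eexists; apply (is_derive_ricci_defect N T f0 HT smooth_f0 Hp_pos Hp2).
  - change (Derive (fun x => psi x) r) with (Derive psi r).
    change (Derive (fun x => ricci_defect N T f0 x) r) with (Derive (ricci_defect N T f0) r).
    rewrite (is_derive_unique _ _ _ (is_derive_psi r)).
    rewrite (is_derive_unique _ _ _ (is_derive_ricci_defect N T f0 HT smooth_f0 Hp_pos Hp2 r)).
    ring.
Qed.

Lemma flow_D3_identity r : Derive_n f 3 r / Derive_n f 2 r =
  xi r / t + N - Derive f0 r / T - (N - 1) * (Derive_n f 2 r / Derive f r).
Proof. pose proof (flow_slope_identity r) as E. unfold DPhi, ricci_defect_slope in E. lra. Qed.

Lemma is_derive_xi r : is_derive xi r (Derive_n f 2 r - s / T * Derive_n f0 2 r).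
Proof. unfold xi. auto_derive; auto. normalize_Derive. ring. Qed.

Lemma Derive2_xi r : Derive (Derive xi) r = Derive_n f 3 r - s / T * Derive_n f0 3 r.
Proof.
  rewrite (Derive_ext _ _ r (fun z => is_derive_unique _ _ _ (is_derive_xi z))).
  apply is_derive_unique. auto_derive; auto. normalize_Derive. ring.
Qed.

Lemma xi_lim_m_infty : filterlim xi (Rbar_locally m_infty) (locally 0).
Proof.
  replace 0 with ((N - K) * s - s / T * ((N - K) * T)) by (field; lra).
  exact (is_lim_minus_scal _ _ m_infty _ _ (s / T) (cp_lim_m_infty _ _ _ Hf) (cp_lim_m_infty _ _ _ Hf0)).
Qed.

Lemma xi_lim_p_infty : filterlim xi (Rbar_locally p_infty) (locally 0).
Proof.
  replace 0 with ((N + K) * s - s / T * ((N + K) * T)) by (field; lra).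
  exact (is_lim_minus_scal _ _ p_infty _ _ (s / T) (cp_lim_p_infty _ _ _ Hf) (cp_lim_p_infty _ _ _ Hf0)).
Qed.

Lemma DPhi_at_critical r : Derive_n f 2 r = s / T * Derive_n f0 2 r ->
  DPhi r = (Derive_n f 3 r - s / T * Derive_n f0 3 r) / Derive_n f 2 r -
    (N - 1) * (Derive_n f0 2 r * xi r / (Derive f r * Derive f0 r)).
Proof.
  intro E. pose proof (Hy_pos r). pose proof (Hp_pos r). pose proof (Hp2 r).
  unfold DPhi, xi. rewrite E. field. repeat split; apply Rgt_not_eq; auto.
Qed.

Variable KD : R.
Hypothesis HKD : forall r, Rabs (ricci_defect_slope N T f0 r) <= KD.

(** Maximum principle: where [sigma xi] is maximal and positive, [DPhi] has the sign of
    [- sigma], so [sigma xi / t = sigma (DPhi - ricci_defect_slope)] is at most [KD]. *)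
Lemma slope_deviation_at_max sigma c0 : sigma = 1 \/ sigma = -1 ->
  (forall x, sigma * xi x <= sigma * xi c0) -> 0 < sigma * xi c0 -> sigma * xi c0 <= t * KD.
Proof.
  intros Hsg Hmax Hpos.
  set (g := fun x => sigma * xi x).
  assert (Dg : forall z, Derive g z = sigma * (Derive_n f 2 z - s / T * Derive_n f0 2 z)).
  { intro z. unfold g. rewrite Derive_scal. f_equal. apply is_derive_unique, is_derive_xi. }
  destruct (global_max_Derive g c0) as [A B]; [intro; unfold g, xi; auto_derive; auto| |exact Hmax|].
  { apply (ex_derive_ext (fun z => sigma * (Derive_n f 2 z - s / T * Derive_n f0 2 z)));
      [intro; symmetry; apply Dg|]. auto_derive; auto. }
  rewrite Dg in A. rewrite (Derive_ext _ _ c0 Dg), Derive_scal in B.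
  replace (Derive (fun z => Derive_n f 2 z - s / T * Derive_n f0 2 z) c0)
    with (Derive (Derive xi) c0) in B
    by (apply Derive_ext; intro; apply is_derive_unique, is_derive_xi).
  rewrite Derive2_xi in B.
  assert (Crit : Derive_n f 2 c0 = s / T * Derive_n f0 2 c0) by (destruct Hsg as [->| ->]; lra).
  pose proof (DPhi_at_critical c0 Crit) as E. rewrite flow_slope_identity in E.
  pose proof (Hy_pos c0). pose proof (Hp_pos c0). pose proof (Hy2 c0) as Hy2c. pose proof (Hp2 c0).
  assert (T1 : sigma * ((Derive_n f 3 c0 - s / T * Derive_n f0 3 c0) / Derive_n f 2 c0) <= 0).
  { unfold Rdiv. rewrite <- Rmult_assoc. pose proof (Rinv_0_lt_compat _ Hy2c). unfold g in B. nra. }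
  assert (T2 : 0 <= (N - 1) * (Derive_n f0 2 c0 * (sigma * xi c0) / (Derive f c0 * Derive f0 c0))).
  { apply Rmult_le_pos; [lra|]. apply Rlt_le, Rdiv_lt_0_compat; nra. }
  assert (E' : sigma * (xi c0 / t) =
      sigma * ((Derive_n f 3 c0 - s / T * Derive_n f0 3 c0) / Derive_n f 2 c0) -
      (N - 1) * (Derive_n f0 2 c0 * (sigma * xi c0) / (Derive f c0 * Derive f0 c0)) -
      sigma * ricci_defect_slope N T f0 c0).
  { replace (sigma * (xi c0 / t))
      with (sigma * (xi c0 / t + ricci_defect_slope N T f0 c0) - sigma * ricci_defect_slope N T f0 c0)
      by ring.
    rewrite E. field. repeat split; apply Rgt_not_eq; auto; nra. }
  pose proof (HKD c0) as Q. apply Rabs_le_between in Q.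
  replace (sigma * xi c0) with (t * (sigma * (xi c0 / t))) by (field; lra).
  apply Rmult_le_compat_l; [lra|]. destruct Hsg as [->| ->]; lra.
Qed.

Lemma slope_deviation_signed sigma : sigma = 1 \/ sigma = -1 ->
  forall r, sigma * xi r <= t * KD.
Proof.
  intros Hsg r0. destruct (Rle_dec (sigma * xi r0) (t * KD)) as [?|Hgt]; [assumption|exfalso].
  assert (HKD0 : 0 <= KD).
  { pose proof (HKD 0). pose proof (Rabs_pos (ricci_defect_slope N T f0 0)). lra. }
  assert (Hx0 : 0 < sigma * xi r0) by nra.
  assert (Tail : forall x, Rabs (xi x - 0) < sigma * xi r0 -> sigma * xi x < sigma * xi r0).
  { intros x Hx. apply Rabs_lt_between in Hx. destruct Hsg as [->| ->]; lra. }
  destruct (continuous_attains_max (fun x => sigma * xi x) r0) as [c0 Hc0].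
  - intro z. apply ex_derive_continuity_pt. unfold xi. auto_derive; auto.
  - destruct (filterlim_m_infty_eps xi 0 xi_lim_m_infty _ Hx0) as [M HM].
    exists (M - 1). intros; apply Tail, HM; lra.
  - destruct (filterlim_p_infty_eps xi 0 xi_lim_p_infty _ Hx0) as [M HM].
    exists (M + 1). intros; apply Tail, HM; lra.
  - pose proof (Hc0 r0).
    pose proof (slope_deviation_at_max sigma c0 Hsg Hc0 ltac:(lra)). lra.
Qed.

Lemma slope_deviation_bound r : Rabs (xi r) <= t * KD.
Proof.
  pose proof (slope_deviation_signed 1 (or_introl eq_refl) r).
  pose proof (slope_deviation_signed (-1) (or_intror eq_refl) r).
  apply Rabs_le_between. lra.
Qed.

Let B x := f0 x - N * T * x.

Lemma is_derive_B x : is_derive B x (Derive f0 x - N * T).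
Proof. unfold B. auto_derive; auto. normalize_Derive. ring. Qed.

Lemma B_attains_min : exists cB, forall x, B cB <= B x.
Proof.
  apply Derive_sign_attains_min; [intro; eexists; apply is_derive_B| |].
  - destruct (filterlim_m_infty_eps _ _ (cp_lim_m_infty _ _ _ Hf0) (K * T) ltac:(nra)) as [M HM].
    exists (M - 1). intros x Hx. rewrite (is_derive_unique _ _ _ (is_derive_B x)).
    specialize (HM x ltac:(lra)). apply Rabs_lt_between in HM. lra.
  - destruct (filterlim_p_infty_eps _ _ (cp_lim_p_infty _ _ _ Hf0) (K * T) ltac:(nra)) as [M HM].
    exists (M + 1). intros x Hx. rewrite (is_derive_unique _ _ _ (is_derive_B x)).
    specialize (HM x ltac:(lra)). apply Rabs_lt_between in HM. lra.
Qed.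

(** [sigma psi] need not attain its extrema, so we minimise [sigma psi + eps B] instead. *)
Let G sigma eps x := sigma * psi x + eps * B x.

Lemma is_derive_G sigma eps z :
  is_derive (G sigma eps) z (sigma * (xi z / t) + eps * (Derive f0 z - N * T)).
Proof.
  unfold G. auto_derive.
  - split; [eexists; apply is_derive_psi|split; [eexists; apply is_derive_B|auto]].
  - change (Derive (fun x => psi x) z) with (Derive psi z).
    change (Derive (fun x => B x) z) with (Derive B z).
    rewrite (is_derive_unique _ _ _ (is_derive_psi z)), (is_derive_unique _ _ _ (is_derive_B z)).
    ring.
Qed.

Lemma is_derive_Derive_G sigma eps z : is_derive (Derive (G sigma eps)) z
  (sigma * ((Derive_n f 2 z - s / T * Derive_n f0 2 z) / t) + eps * Derive_n f0 2 z).
Proof.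
  apply (is_derive_ext (fun z => sigma * (xi z / t) + eps * (Derive f0 z - N * T)));
    [intro; symmetry; apply is_derive_unique, is_derive_G|].
  auto_derive.
  - split; [eexists; apply is_derive_xi|split; auto].
  - change (Derive (fun x => xi x) z) with (Derive xi z).
    rewrite (is_derive_unique _ _ _ (is_derive_xi z)). normalize_Derive. field. lra.
Qed.

Lemma G_attains_min sigma eps : sigma = 1 \/ sigma = -1 -> 0 < eps ->
  exists c0, forall x, G sigma eps c0 <= G sigma eps x.
Proof.
  intros Hsg He.
  assert (Hw : 0 < t * eps * K * T / 2)
    by (apply Rdiv_lt_0_compat; [repeat apply Rmult_lt_0_compat|]; lra).
  assert (Hxi : forall x, Rabs (xi x - 0) < t * eps * K * T / 2 ->
      - (eps * K * T / 2) < sigma * (xi x / t) < eps * K * T / 2).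
  { intros x Hx. apply Rabs_lt_between. rewrite Rminus_0_r in Hx.
    rewrite Rabs_mult, Rabs_div, (Rabs_right t) by lra. replace (Rabs sigma) with 1
      by (destruct Hsg as [->| ->]; unfold Rabs; destruct Rcase_abs; lra).
    rewrite Rmult_1_l. apply (Rlt_div_l _ _ t ltac:(lra)). nra. }
  apply Derive_sign_attains_min; [intro; eexists; apply is_derive_G| |].
  - destruct (filterlim_m_infty_eps _ _ xi_lim_m_infty _ Hw) as [M1 H1].
    destruct (filterlim_m_infty_eps _ _ (cp_lim_m_infty _ _ _ Hf0) (K * T / 2)) as [M2 H2]; [nra|].
    exists (Rmin M1 M2 - 1). intros x Hx. pose proof (Rmin_l M1 M2). pose proof (Rmin_r M1 M2).
    specialize (H1 x ltac:(lra)). specialize (H2 x ltac:(lra)). apply Hxi in H1.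
    apply Rabs_lt_between in H2. rewrite (is_derive_unique _ _ _ (is_derive_G _ _ x)). nra.
  - destruct (filterlim_p_infty_eps _ _ xi_lim_p_infty _ Hw) as [M1 H1].
    destruct (filterlim_p_infty_eps _ _ (cp_lim_p_infty _ _ _ Hf0) (K * T / 2)) as [M2 H2]; [nra|].
    exists (Rmax M1 M2 + 1). intros x Hx. pose proof (Rmax_l M1 M2). pose proof (Rmax_r M1 M2).
    specialize (H1 x ltac:(lra)). specialize (H2 x ltac:(lra)). apply Hxi in H1.
    apply Rabs_lt_between in H2. rewrite (is_derive_unique _ _ _ (is_derive_G _ _ x)). nra.
Qed.

(** At the minimum, the first two derivatives compare [f'] and [f''] with [(s/T) f0'] and
    [(s/T) f0''] up to the error [t eps]. *)
Lemma log_ratio_at_G_min sigma eps c0 : sigma = 1 \/ sigma = -1 -> 0 < eps ->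
  t * eps <= s / T / 2 -> (forall x, G sigma eps c0 <= G sigma eps x) ->
  - (N * ln 2) <= sigma * (Phi c0 - N * ln (s / T)).
Proof.
  intros Hsg He Hte Hc0.
  destruct (global_min_Derive (G sigma eps) c0) as [A1 A2];
    [intro; eexists; apply is_derive_G|eexists; apply is_derive_Derive_G|exact Hc0|].
  rewrite (is_derive_unique _ _ _ (is_derive_G _ _ c0)) in A1.
  rewrite (is_derive_unique _ _ _ (is_derive_Derive_G _ _ c0)) in A2.
  pose proof (Hy_pos c0). pose proof (Hp_pos c0). pose proof (Hy2 c0). pose proof (Hp2 c0).
  assert (Hd : 0 <= t * eps <= s / T / 2) by (split; [nra|lra]).
  assert (L1 : - ln 2 <= sigma * (ln (Derive_n f 2 c0 / Derive_n f0 2 c0) - ln (s / T))).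
  { apply (signed_ln_ratio_ge sigma (s / T) (t * eps)); auto.
    assert (A2' : 0 <= sigma * (Derive_n f 2 c0 - s / T * Derive_n f0 2 c0) +
        t * eps * Derive_n f0 2 c0).
    { replace (sigma * (Derive_n f 2 c0 - s / T * Derive_n f0 2 c0) + t * eps * Derive_n f0 2 c0)
        with (t * (sigma * ((Derive_n f 2 c0 - s / T * Derive_n f0 2 c0) / t) +
          eps * Derive_n f0 2 c0)) by (field; lra).
      apply Rmult_le_pos; lra. }
    destruct Hsg as [->| ->]; lra. }
  assert (L2 : - ln 2 <= sigma * (ln (Derive f c0 / Derive f0 c0) - ln (s / T))).
  { apply (signed_ln_ratio_ge sigma (s / T) (t * eps)); auto.
    assert (E : sigma * xi c0 = - (t * eps) * (Derive f0 c0 - N * T)).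
    { replace (sigma * xi c0) with (t * (sigma * (xi c0 / t))) by (field; lra).
      replace (sigma * (xi c0 / t)) with (- eps * (Derive f0 c0 - N * T)) by lra. ring. }
    assert (0 <= t * eps * (N * T)) by (repeat apply Rmult_le_pos; lra).
    unfold xi in E. destruct Hsg as [->| ->]; lra. }
  assert (Hln2 : 0 < ln 2) by (rewrite <- ln_1; apply ln_increasing; lra).
  unfold Phi. nra.
Qed.

Variable KF : R.
Hypothesis HKF : forall r z, Rabs (ricci_defect N T f0 r - ricci_defect N T f0 z) <= KF.

Lemma log_ratio_signed sigma : sigma = 1 \/ sigma = -1 ->
  forall r, - (N * ln 2 + KF + 1) <= sigma * (Phi r - N * ln (s / T)).
Proof.
  intros Hsg r. destruct B_attains_min as [cB HcB].
  assert (HBr : 0 <= B r - B cB) by (specialize (HcB r); lra).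
  (* [eps] is small enough that the perturbation [eps B] costs at most [1] at [r]. *)
  set (eps := Rmin (s / T / 2 / t) (1 / (B r - B cB + 1))).
  assert (He : 0 < eps) by (apply Rmin_pos; apply Rdiv_lt_0_compat; lra).
  assert (Hte : t * eps <= s / T / 2).
  { apply Rle_trans with (t * (s / T / 2 / t)); [apply Rmult_le_compat_l; [lra|apply Rmin_l]|].
    right. field. lra. }
  assert (HeB : eps * (B r - B cB) <= 1).
  { apply Rle_trans with (1 / (B r - B cB + 1) * (B r - B cB));
      [apply Rmult_le_compat_r; [lra|apply Rmin_r]|].
    replace (1 / (B r - B cB + 1) * (B r - B cB)) with ((B r - B cB) / (B r - B cB + 1))
      by (field; lra).
    apply (Rle_div_l (B r - B cB) 1 (B r - B cB + 1)); lra. }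
  destruct (G_attains_min sigma eps Hsg He) as [c0 Hc0].
  pose proof (log_ratio_at_G_min sigma eps c0 Hsg He Hte Hc0).
  assert (Hpsi : - 1 <= sigma * (psi r - psi c0)).
  { specialize (Hc0 r). unfold G in Hc0. pose proof (HcB c0).
    assert (eps * (B c0 - B cB) >= 0) by (apply Rle_ge, Rmult_le_pos; lra). nra. }
  assert (HF : - KF <= sigma * (ricci_defect N T f0 r - ricci_defect N T f0 c0)).
  { specialize (HKF r c0). apply Rabs_le_between in HKF. destruct Hsg as [->| ->]; lra. }
  pose proof (flow_log_identity r). pose proof (flow_log_identity c0).
  destruct Hsg as [->| ->]; lra.
Qed.

Lemma log_ratio_bound r : Rabs (Phi r - N * ln (s / T)) <= N * ln 2 + KF + 1.
Proof.
  pose proof (log_ratio_signed 1 (or_introl eq_refl) r).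
  pose proof (log_ratio_signed (-1) (or_intror eq_refl) r).
  apply Rabs_le_between. lra.
Qed.

Lemma slope_log_ratio_bound r :
  Rabs (ln (Derive f r / Derive f0 r) - ln (s / T)) <= ln ((N + K) / (N - K)).
Proof.
  pose proof (Hy r) as Hyr. pose proof (Hp r) as Hpr. fold s in Hyr.
  replace (ln (Derive f r / Derive f0 r) - ln (s / T))
    with (ln (Derive f r / s) - ln (Derive f0 r / T))
    by (rewrite !ln_div; try apply Rdiv_lt_0_compat; try lra; nra).
  apply Rabs_ln_diff_le; try lra;
    split; [apply (Rle_div_r _ _ s Hs)|apply (Rle_div_l _ _ s Hs)|
            apply (Rle_div_r _ _ T HT)|apply (Rle_div_l _ _ T HT)]; nra.
Qed.

Lemma flow_D2_comparable r :
  let KE := N * ln 2 + KF + 1 + (N - 1) * ln ((N + K) / (N - K)) in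
  exp (- KE) * (s / T) * Derive_n f0 2 r <= Derive_n f 2 r <= exp KE * (s / T) * Derive_n f0 2 r.
Proof.
  intro KE. pose proof (Hy2 r). pose proof (Hp2 r).
  assert (HR : Rabs (ln (Derive_n f 2 r / Derive_n f0 2 r) - ln (s / T)) <= KE).
  { pose proof (log_ratio_bound r) as A. pose proof (slope_log_ratio_bound r) as S.
    apply Rabs_le_between in A, S. apply Rabs_le_between. unfold Phi in A. unfold KE. nra. }
  apply Rabs_le_between in HR.
  assert (Eq : Derive_n f 2 r = exp (ln (Derive_n f 2 r / Derive_n f0 2 r)) * Derive_n f0 2 r)
    by (rewrite exp_ln by (apply Rdiv_lt_0_compat; lra); field; lra).
  rewrite <- (exp_ln (s / T)) by exact HsT. rewrite <- !exp_plus, Eq.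
  split; apply Rmult_le_compat_r; try lra; apply exp_le_exp; lra.
Qed.

Lemma flow_D3_ratio_le r :
  let KE := N * ln 2 + KF + 1 + (N - 1) * ln ((N + K) / (N - K)) in
  Rabs (Derive_n f 3 r) / Derive_n f 2 r <=
  KD + K + (N - 1) * exp KE * Derive_n f0 2 r / ((N - K) * T).
Proof.
  intro KE. pose proof (Hy r) as Hyr. pose proof (Hp r) as Hpr. fold s in Hyr.
  pose proof (Hy2 r). pose proof (Hp2 r). pose proof (exp_pos KE).
  replace (Rabs (Derive_n f 3 r) / Derive_n f 2 r) with (Rabs (Derive_n f 3 r / Derive_n f 2 r))
    by (rewrite Rabs_div, (Rabs_right (Derive_n f 2 r)); lra).
  rewrite flow_D3_identity.
  assert (X1 : Rabs (xi r / t) <= KD).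
  { rewrite Rabs_div, (Rabs_right t) by lra. apply (Rle_div_l _ _ t ltac:(lra)).
    rewrite Rmult_comm. apply slope_deviation_bound. }
  assert (X2 : Rabs (N - Derive f0 r / T) <= K).
  { assert (N - K <= Derive f0 r / T <= N + K)
      by (split; [apply (Rle_div_r _ _ T HT)|apply (Rle_div_l _ _ T HT)]; nra).
    apply Rabs_le_between. lra. }
  assert (X3 : 0 <= Derive_n f 2 r / Derive f r <= exp KE * Derive_n f0 2 r / ((N - K) * T)).
  { split; [apply Rlt_le, Rdiv_lt_0_compat; nra|].
    apply (Rle_div_l _ _ (Derive f r) ltac:(nra)). apply Rle_trans with (exp KE * (s / T) * Derive_n f0 2 r);
      [apply flow_D2_comparable|].
    replace (exp KE * Derive_n f0 2 r / ((N - K) * T) * Derive f r)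
      with (exp KE * Derive_n f0 2 r / T * (Derive f r / (N - K))) by (field; lra).
    replace (exp KE * (s / T) * Derive_n f0 2 r) with (exp KE * Derive_n f0 2 r / T * s) by (field; lra).
    apply Rmult_le_compat_l; [apply Rlt_le, Rdiv_lt_0_compat; nra|].
    apply (Rle_div_r _ _ (N - K) ltac:(lra)). nra. }
  eapply Rle_trans; [apply Rabs_triang|]. rewrite Rabs_Ropp.
  replace (xi r / t + N - Derive f0 r / T) with (xi r / t + (N - Derive f0 r / T)) by ring.
  pose proof (Rabs_triang (xi r / t) (N - Derive f0 r / T)).
  rewrite (Rabs_right ((N - 1) * _)) by (apply Rle_ge, Rmult_le_pos; lra).
  assert ((N - 1) * (Derive_n f 2 r / Derive f r) <=
    (N - 1) * (exp KE * Derive_n f0 2 r / ((N - K) * T))) by (apply Rmult_le_compat_l; lra).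
  replace ((N - 1) * exp KE * Derive_n f0 2 r / ((N - K) * T))
    with ((N - 1) * (exp KE * Derive_n f0 2 r / ((N - K) * T))) by (field; lra).
  lra.
Qed.

End Flow.

(** * Case II *)

Lemma calabi_potential_convex n k a b f : calabi_potential n k a b f -> convex_potential a b f.
Proof. intros (Hs & _ & _ & H2 & Ha & Hb & _). now constructor. Qed.

Lemma convex_potential_abs_le a b f : 0 <= a -> convex_potential a b f -> f 0 = 0 ->
  forall r, Rabs (f r) <= b * Rabs r.
Proof.
  intros Ha Hf H0 r. pose proof (convex_potential_slope a b f Hf) as Hs.
  assert (Hb : 0 <= b) by (pose proof (Hs 0); lra).
  replace (f r) with (f r - f 0) by (rewrite H0; ring).
  eapply Rle_trans; [apply (Derive_dominated f (fun x => b * x))|].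
  - intro z. split; [apply smooth_ex_derive, (cp_smooth _ _ _ Hf)|]. split; [auto_derive; auto|].
    rewrite Derive_scal, Derive_id, Rmult_1_r, Rabs_right; pose proof (Hs z); lra.
  - rewrite <- Rmult_minus_distr_l, Rminus_0_r, Rabs_mult, (Rabs_right b) by lra. lra.
Qed.

Lemma filterlim_at_left_linear_bound (g : R -> R) T C : 0 < T -> 0 <= C ->
  (forall t, 0 <= t < T -> Rabs (g t) <= C * (T - t)) -> filterlim g (at_left T) (locally 0).
Proof.
  intros HT HC H. apply filterlim_locally. intro eps. pose proof (cond_pos eps).
  exists (mkposreal _ (Rmin_pos T (eps / (C + 1)) HT ltac:(apply Rdiv_lt_0_compat; lra))).
  intros t Ht Hlt. simpl in Ht. change (Rabs (t - T) < Rmin T (eps / (C + 1))) in Ht.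
  apply Rabs_lt_between in Ht. pose proof (Rmin_l T (eps / (C + 1))).
  pose proof (Rmin_r T (eps / (C + 1))).
  change (Rabs (g t - 0) < eps). rewrite Rminus_0_r.
  eapply Rle_lt_trans; [apply H; lra|].
  apply Rle_lt_trans with (C * (eps / (C + 1))); [apply Rmult_le_compat_l; lra|].
  apply (Rmult_lt_reg_r (C + 1)); [lra|].
  replace (C * (eps / (C + 1)) * (C + 1)) with (C * eps) by (field; lra). nra.
Qed.

Lemma flow_logistic_bounds (n : nat) (N K T t c m1 M1 KD KF : R) (f f0 : R -> R) :
  N = INR n -> (1 <= n)%nat -> 0 < T -> 0 < K -> K + 1 <= N -> 0 < t < T ->
  convex_potential ((N - K) * (T - t)) ((N + K) * (T - t)) f ->
  convex_potential ((N - K) * T) ((N + K) * T) f0 ->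
  (forall r, f r - f0 r + t * N * r - t * ln ((Derive f r) ^ (n - 1) * Derive_n f 2 r) = c) ->
  (forall r, m1 * logistic_density (K * r) <= Derive_n f0 2 r <= M1 * logistic_density (K * r)) ->
  (forall r, Rabs (ricci_defect_slope N T f0 r) <= KD) ->
  (forall r z, Rabs (ricci_defect N T f0 r - ricci_defect N T f0 z) <= KF) ->
  forall r, let KE := N * ln 2 + KF + 1 + (N - 1) * ln ((N + K) / (N - K)) in
  exp (- KE) * m1 / T * logistic_density (K * r) * (T - t) <= Derive_n f 2 r <=
    exp KE * M1 / T * logistic_density (K * r) * (T - t) /\
  Rabs (Derive_n f 3 r) <=
    (KD + K + (N - 1) * exp KE * (M1 / 4) / ((N - K) * T)) * Derive_n f 2 r.
Proof.
  intros HN Hn HT HK HNK Ht Hf Hf0 Hc HG HD HF r KE.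
  pose proof (flow_D2_comparable n N K T t c f f0 HN Hn HT HK HNK Ht Hf Hf0 Hc KF HF r) as D2.
  pose proof (flow_D3_ratio_le n N K T t c f f0 HN Hn HT HK HNK Ht Hf Hf0 Hc KD HD KF HF r) as D3.
  cbv zeta in D2, D3. fold KE in D2, D3.
  destruct (HG r) as [G1 G2]. pose proof (logistic_density_le_quarter (K * r)).
  pose proof (exp_pos KE). pose proof (exp_pos (- KE)).
  pose proof (cp_convex _ _ _ Hf r) as Hy2.
  assert (HsT : 0 <= (T - t) / T) by (apply Rlt_le, Rdiv_lt_0_compat; lra).
  split; [split|].
  - replace (exp (- KE) * m1 / T * logistic_density (K * r) * (T - t))
      with (exp (- KE) * ((T - t) / T) * (m1 * logistic_density (K * r))) by (field; lra).
    eapply Rle_trans; [|apply D2]. apply Rmult_le_compat_l; [apply Rmult_le_pos|]; lra.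
  - replace (exp KE * M1 / T * logistic_density (K * r) * (T - t))
      with (exp KE * ((T - t) / T) * (M1 * logistic_density (K * r))) by (field; lra).
    eapply Rle_trans; [apply D2|]. apply Rmult_le_compat_l; [apply Rmult_le_pos|]; lra.
  - apply (Rle_div_l _ _ _ Hy2) in D3. eapply Rle_trans; [apply D3|].
    apply Rmult_le_compat_r; [lra|].
    assert ((N - 1) * exp KE * Derive_n f0 2 r / ((N - K) * T) <=
      (N - 1) * exp KE * (M1 / 4) / ((N - K) * T)).
    { unfold Rdiv. apply Rmult_le_compat_r; [apply Rlt_le, Rinv_0_lt_compat; nra|].
      apply Rmult_le_compat_l; [nra|].
      pose proof (logistic_density_pos (K * r)). pose proof (cp_convex _ _ _ Hf0 r).
      assert (0 < M1) by nra.
      apply Rle_trans with (M1 * logistic_density (K * r)); [lra|].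
      apply Rmult_le_compat_l; lra. }
    lra.
Qed.

Lemma flow_exponent_nonneg N K KF : 0 < K -> K + 1 <= N -> 0 <= KF ->
  0 <= N * ln 2 + KF + 1 + (N - 1) * ln ((N + K) / (N - K)).
Proof.
  intros HK HN HKF.
  assert (0 < ln 2) by (rewrite <- ln_1; apply ln_increasing; lra).
  assert (0 <= ln ((N + K) / (N - K)))
    by (rewrite <- ln_1; apply ln_le; [lra|apply (Rle_div_r 1 (N + K) (N - K)); lra]).
  nra.
Qed.

Lemma case_II_D2_D3_bounds (n : nat) (N K T : R) (u : R -> R -> R) (phi : R -> R) :
  N = INR n -> (1 <= n)%nat -> 0 < T -> 0 < K -> K + 1 <= N ->
  (forall t, 0 <= t < T ->
     convex_potential ((N - K) * (T - t)) ((N + K) * (T - t)) (u t) /\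
     continuity_eq n (u 0) (u t) t) ->
  smooth phi -> phi ((N - K) * T) = 0 -> phi ((N + K) * T) = 0 ->
  Derive phi ((N - K) * T) = K -> Derive phi ((N + K) * T) = - K ->
  (forall r, phi (Derive (u 0) r) = Derive_n (u 0) 2 r) ->
  exists A B L, 0 < A /\ forall t r, 0 <= t < T ->
    A * logistic_density (K * r) * (T - t) <= Derive_n (u t) 2 r <=
      B * logistic_density (K * r) * (T - t) /\
    Rabs (Derive_n (u t) 3 r) <= L * Derive_n (u t) 2 r.
Proof.
  intros HN Hn HT HK HNK Hu Hphi Hpa Hpb Hda Hdb Hprof.
  assert (Hu0 : convex_potential ((N - K) * T) ((N + K) * T) (u 0)).
  { destruct (Hu 0 ltac:(lra)) as [H _]. rewrite Rminus_0_r in H. exact H. }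
  destruct (convex_potential_D2_logistic N K T _ _ (u 0) phi HT HK eq_refl eq_refl Hu0
    Hphi Hpa Hpb Hda Hdb Hprof) as [m1 [M1 [Hm1 [HM1 HG]]]].
  destruct (convex_potential_D3_le N K T _ _ (u 0) phi HT HK eq_refl eq_refl Hu0
    Hphi Hda Hdb Hprof) as [K3 [HK3 H3]].
  destruct (ricci_defect_slope_bounded N K T _ _ (u 0) phi HT HK HNK eq_refl eq_refl Hu0
    Hphi Hpa Hpb Hda Hdb Hprof) as [KD [HKD HD]].
  destruct (ricci_defect_oscillation N K T _ _ (u 0) phi HT HK HNK eq_refl eq_refl Hu0
    Hphi Hpa Hpb Hda Hdb Hprof) as [KF [HKF HF]].
  set (KE := N * ln 2 + KF + 1 + (N - 1) * ln ((N + K) / (N - K))).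
  assert (HeK : exp (- KE) <= 1 <= exp KE).
  { pose proof (flow_exponent_nonneg N K KF HK HNK HKF).
    rewrite <- exp_0. split; apply exp_le_exp; unfold KE; lra. }
  assert (HM : 0 <= (N - 1) * exp KE * (M1 / 4) / ((N - K) * T)).
  { pose proof (exp_pos KE). apply Rmult_le_pos; [apply Rmult_le_pos; [nra|lra]|].
    apply Rlt_le, Rinv_0_lt_compat. nra. }
  exists (exp (- KE) * m1 / T), (exp KE * M1 / T),
    (K3 + (KD + K + (N - 1) * exp KE * (M1 / 4) / ((N - K) * T))).
  split; [apply Rdiv_lt_0_compat; [pose proof (exp_pos (- KE)); nra|lra]|].
  intros t r Ht. pose proof (cp_convex _ _ _ (proj1 (Hu t Ht)) r).
  destruct (Req_dec t 0) as [->|Ht0].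
  - destruct (HG r) as [G1 G2]. pose proof (logistic_density_pos (K * r)). rewrite Rminus_0_r.
    replace (exp (- KE) * m1 / T * logistic_density (K * r) * T)
      with (exp (- KE) * (m1 * logistic_density (K * r))) by (field; lra).
    replace (exp KE * M1 / T * logistic_density (K * r) * T)
      with (exp KE * (M1 * logistic_density (K * r))) by (field; lra).
    assert (0 < m1 * logistic_density (K * r)) by (apply Rmult_lt_0_compat; lra).
    split; [split|].
    + apply Rle_trans with (m1 * logistic_density (K * r)); [|lra].
      rewrite <- (Rmult_1_l (m1 * _)) at 2. apply Rmult_le_compat_r; lra.
    + apply Rle_trans with (M1 * logistic_density (K * r)); [lra|].
      rewrite <- (Rmult_1_l (M1 * _)) at 1. apply Rmult_le_compat_r; lra.
    + eapply Rle_trans; [apply H3|]. apply Rmult_le_compat_r; lra.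
  - destruct (Hu t Ht) as [Hut [c Hc]]. rewrite <- HN in Hc.
    destruct (flow_logistic_bounds n N K T t c m1 M1 KD KF (u t) (u 0) HN Hn HT HK HNK
      ltac:(lra) Hut Hu0 Hc HG HD HF r) as [B1 B2]. fold KE in B1, B2.
    split; [exact B1|]. eapply Rle_trans; [exact B2|]. apply Rmult_le_compat_r; lra.
Qed.

Lemma one_constant_bounds A B L x s y z : 0 < A -> 0 < x * s -> 0 < y ->
  A * x * s <= y <= B * x * s -> Rabs z <= L * y ->
  let C := 1 + / A + Rabs B + Rabs L in
  / C * x * s < y /\ y <= C * x * s /\ Rabs z / y <= C.
Proof.
  intros HA Hx Hy [H1 H2] H3; cbv zeta. rewrite !Rmult_assoc in *. pose proof (Rinv_0_lt_compat A HA).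
  pose proof (Rle_abs B). pose proof (Rle_abs L). pose proof (Rabs_pos B). pose proof (Rabs_pos L).
  split; [|split].
  - apply Rlt_le_trans with (A * (x * s)); [|exact H1]. apply Rmult_lt_compat_r; [exact Hx|].
    rewrite <- (Rinv_inv A) at 2. apply Rinv_lt_contravar; [apply Rmult_lt_0_compat|]; lra.
  - eapply Rle_trans; [exact H2|]. apply Rmult_le_compat_r; lra.
  - apply (Rle_div_l _ _ _ Hy). eapply Rle_trans; [exact H3|]. apply Rmult_le_compat_r; lra.
Qed.

Lemma case_II_normal_form (n k : nat) (u : R -> R -> R) (a0 b0 T : R) :
  0 < a0 -> (k + 1 <= n)%nat -> a0 * (INR n + INR k) = b0 * (INR n - INR k) ->
  T = a0 / (INR n - INR k) ->
  (forall t, 0 <= t < T ->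
     calabi_potential n k (a0 + (INR k - INR n) * t) (b0 - (INR k + INR n) * t) (u t)
     /\ continuity_eq n (u 0) (u t) t) ->
  forall t, 0 <= t < T ->
  calabi_potential n k ((INR n - INR k) * (T - t)) ((INR n + INR k) * (T - t)) (u t) /\
  continuity_eq n (u 0) (u t) t.
Proof.
  intros Ha0 Hkn Hcase -> Hsol t Ht.
  assert (HNK : INR k + 1 <= INR n) by (rewrite <- S_INR; apply le_INR; lia).
  replace ((INR n - INR k) * (a0 / (INR n - INR k) - t)) with (a0 + (INR k - INR n) * t)
    by (field; lra).
  replace ((INR n + INR k) * (a0 / (INR n - INR k) - t)) with (b0 - (INR k + INR n) * t).
  - apply Hsol, Ht.
  - apply (Rmult_eq_reg_r (INR n - INR k)); [|lra].
    replace ((INR n + INR k) * (a0 / (INR n - INR k) - t) * (INR n - INR k))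
      with (a0 * (INR n + INR k) - (INR n + INR k) * (INR n - INR k) * t) by (field; lra).
    rewrite Hcase. ring.
Qed.

Theorem mainTheorem10 (n k : nat) (u : R -> R -> R) (a0 b0 : R)
  (hk1 : (1 <= k)%nat) (hkn : (k <= n - 1)%nat)
  (ha0 : 0 < a0) (hab : a0 < b0)
  (hcase : a0 * (INR n + INR k) = b0 * (INR n - INR k))
  (hsol : forall t, 0 <= t < a0 / (INR n - INR k) ->
     calabi_potential n k (a0 + (INR k - INR n) * t) (b0 - (INR k + INR n) * t) (u t)
     /\ continuity_eq n (u 0) (u t) t) :
  let T := a0 / (INR n - INR k) in
  (forall t r, 0 <= t < T ->
     (INR n - INR k) * (T - t) < Derive (u t) r < (INR n + INR k) * (T - t)) /\
  (forall r, filterlim (fun t => u t r) (at_left T) (locally 0)) /\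
  (exists C : R, 0 < C /\ forall t r, 0 <= t < T ->
     / C * (exp (INR k * r) / (1 + exp (INR k * r)) ^ 2) * (T - t) < Derive_n (u t) 2 r /\
     Derive_n (u t) 2 r <= C * (exp (INR k * r) / (1 + exp (INR k * r)) ^ 2) * (T - t) /\
     Rabs (Derive_n (u t) 3 r) / Derive_n (u t) 2 r <= C).
Proof.
  intros T.
  assert (HK : 1 <= INR k) by (apply (le_INR 1); lia).
  assert (HNK : INR k + 1 <= INR n) by (rewrite <- S_INR; apply le_INR; lia).
  assert (HT : 0 < T) by (apply Rdiv_lt_0_compat; lra).
  pose proof (case_II_normal_form n k u a0 b0 T ha0 ltac:(lia) hcase eq_refl hsol) as Hsol.
  assert (Hu : forall t, 0 <= t < T ->
    convex_potential ((INR n - INR k) * (T - t)) ((INR n + INR k) * (T - t)) (u t) /\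
    continuity_eq n (u 0) (u t) t)
    by (intros t Ht; destruct (Hsol t Ht) as [Hc He]; split; [eapply calabi_potential_convex|]; eauto).
  split; [|split].
  - intros t r Ht. exact (convex_potential_slope _ _ _ (proj1 (Hu t Ht)) r).
  - intro r. apply (filterlim_at_left_linear_bound _ T ((INR n + INR k) * Rabs r) HT);
      [pose proof (Rabs_pos r); nra|].
    intros t Ht. destruct (Hsol t Ht) as [(_ & H0 & _) _].
    rewrite Rmult_assoc, (Rmult_comm (Rabs r)), <- Rmult_assoc.
    apply (convex_potential_abs_le ((INR n - INR k) * (T - t)) _ _ ltac:(nra) (proj1 (Hu t Ht)) H0).
  - destruct (Hsol 0 ltac:(lra)) as [(_ & _ & _ & _ & _ & _ & phi & Hphi & Hpr) _].
    rewrite Rminus_0_r in Hpr.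
    destruct (case_II_D2_D3_bounds n (INR n) (INR k) T u phi eq_refl ltac:(lia) HT ltac:(lra) HNK
      Hu Hphi ltac:(tauto) ltac:(tauto) ltac:(tauto) ltac:(tauto) ltac:(tauto))
      as [A [B [L [HA Hbd]]]].
    exists (1 + / A + Rabs B + Rabs L).
    split; [pose proof (Rinv_0_lt_compat A HA); pose proof (Rabs_pos B); pose proof (Rabs_pos L); lra|].
    intros t r Ht. destruct (Hbd t r Ht) as [HD2 HD3].
    apply (one_constant_bounds A B L); [exact HA| |apply (cp_convex _ _ _ (proj1 (Hu t Ht)))|exact HD2|exact HD3].
    apply Rmult_lt_0_compat; [apply logistic_density_pos|lra].
Qed.
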